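(* Let $S^2\subset\mathbb{R}^3$ be the round unit sphere, let $l\colon S^3\to T^1S^2$ be the $2:1$ covering map described in the context, and let $\gamma(t)=(\cos t,\sin t,0)$, $t\in\mathbb{R}/2\pi\mathbb{Z}$, be the positively oriented equator. Let $p\in\mathbb{N}$, $q\in\mathbb{N}_0$ be coprime and let $\gamma_{p,q}$ be a $(p,q)$-satellite of $\gamma$. Then the lift of $\gamma_{p,q}$ under $l$ (i.e. a closed curve in $S^3$ projecting under $l$ onto the tangent lift of $\gamma_{p,q}$, traversed twice when $p$ is odd) is homotopic in $S^3\setminus l^{-1}(\gamma,\dot\gamma)=S^3\setminus\{(z,0):|z|=1\}$ to the curve \[t\mapsto \big(c_1e^{i\frac{pt}{2}},\,c_2e^{i\frac{(p-2q)t}{2}}\big),\] for any $c_1,c_2\in\mathbb{R}_{>0}$ with $c_1^2+c_2^2=1$, where $t$ ranges over $\mathbb{R}/2\pi\mathbb{Z}$ if $p$ is even and over $\mathbb{R}/4\pi\mathbb{Z}$ if $p$ is odd.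
   Context: Write $S^3=\{(r_1e^{it_1},r_2e^{it_2}): r_1,r_2\in[0,1],\ r_1^2+r_2^2=1,\ t_1,t_2\in\mathbb{R}/2\pi\mathbb{Z}\}\subset\mathbb{C}^2$, and $T^1S^2=\{(x,u): x\in S^2,\ u\in T_xS^2,\ |u|=1\}$. Euler angles: for $u\in T^1S^2$ not tangent (in either direction) to the equator $\{z=0\}$, $u$ determines an oriented great circle meeting the equator in two points; let $p$ be the one at which the great circle enters the upper hemisphere. Let $\phi(u)\in\mathbb{R}/2\pi\mathbb{Z}$ be the angle between the $x$-axis and $p$, $\theta(u)\in\mathbb{R}/2\pi\mathbb{Z}$ the angle along the oriented great circle from $p$ to the basepoint of $u$, and $\nu(u)\in(0,\pi)$ the angle at $p$ between the tangent of the positively oriented equator and the tangent of the oriented great circle. Then $\Phi_1(u)=(\phi,\theta,\nu)$ is a diffeomorphism from $T^1S^2$ minus the tangent lifts of the two oriented equators onto $\mathbb{R}/2\pi\mathbb{Z}\times\mathbb{R}/2\pi\mathbb{Z}\times(0,\pi)$. Let $\Phi_2(r_1e^{it_1},r_2e^{it_2})=(t_1+t_2,\,t_1-t_2,\,2\arccos r_1)$ on $S^3\setminus\{(z,0),(0,z)\}$. The map $l$ is the smooth extension of $\Phi_1^{-1}\circ\Phi_2$ to all of $S^3$, sending $(e^{it},0)$ to the (doubly traversed) tangent lift of the positively oriented equator and $(0,e^{-it})$ to that of the negatively oriented equator; it is a $2:1$ covering. Satellites: for a regular closed curve $c$ on a surface $S$ its tangent lift is $t\mapsto (c(t),\dot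 c(t)/|\dot c(t)|)\in T^1S$. Let $\gamma\colon\mathbb{R}/2\pi\mathbb{Z}\to S$ be a regular curve with a unit normal field $\eta(t)$ along it, and let $p\in\mathbb{N}$, $q\in\mathbb{N}_0$ be coprime. A curve on $S$ is a $(p,q)$-satellite of $\gamma$ if its tangent lift is homotopic, through tangent lifts of immersed curves, in $T^1S$ minus the tangent lift of $\gamma$, to the tangent lift of $t\mapsto \exp_{\gamma(pt)}(\epsilon\sin(qt)\,\eta(pt))$, $t\in\mathbb{R}/2\pi\mathbb{Z}$, for small $\epsilon>0$. *)

From Stdlib Require Import Reals Lra.
From Coquelicot Require Import Coquelicot.
Open Scope R_scope.

Definition V3 := (R * R * R)%type.
Definition v3x (v : V3) : R := fst (fst v).
Definition v3y (v : V3) : R := snd (fst v).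
Definition v3z (v : V3) : R := snd v.
Definition dot3 (u v : V3) : R := v3x u * v3x v + v3y u * v3y v + v3z u * v3z v.
Definition norm3 (v : V3) : R := sqrt (dot3 v v).
Definition scal3 (a : R) (v : V3) : V3 := (a * v3x v, a * v3y v, a * v3z v).
Definition add3 (u v : V3) : V3 := (v3x u + v3x v, v3y u + v3y v, v3z u + v3z v).

Definition on_S2 (x : V3) : Prop := norm3 x = 1.

Definition smooth_fun (f : R -> R) : Prop :=
  forall (n : nat) (t : R), ex_derive (Derive_n f n) t.

Definition dcurve (c : R -> V3) (t : R) : V3 :=
  (Derive (fun s => v3x (c s)) t, Derive (fun s => v3y (c s)) t,
   Derive (fun s => v3z (c s)) t).
Definition unit_tangent (c : R -> V3) (t : R) : V3 :=
  scal3 (/ norm3 (dcurve c t)) (dcurve c t).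
Definition tangent_lift (c : R -> V3) (t : R) : V3 * V3 := (c t, unit_tangent c t).

Definition closed_immersed_S2 (c : R -> V3) : Prop :=
  (forall t, on_S2 (c t)) /\
  (forall t, c (t + 2 * PI) = c t) /\
  smooth_fun (fun t => v3x (c t)) /\ smooth_fun (fun t => v3y (c t)) /\
  smooth_fun (fun t => v3z (c t)) /\
  (forall t, dcurve c t <> (0, 0, 0)).

Definition cont01 (F : R -> R -> R) : Prop :=
  forall s t, 0 <= s <= 1 -> forall eps, 0 < eps ->
  exists delta, 0 < delta /\
    forall s' t', 0 <= s' <= 1 -> Rabs (s' - s) < delta -> Rabs (t' - t) < delta ->
      Rabs (F s' t' - F s t) < eps.

Definition cont01_V3 (F : R -> R -> V3) : Prop :=
  cont01 (fun s t => v3x (F s t)) /\ cont01 (fun s t => v3y (F s t)) /\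
  cont01 (fun s t => v3z (F s t)).

Definition gamma (t : R) : V3 := (cos t, sin t, 0).
Definition in_lift_gamma (x u : V3) : Prop :=
  exists t, (x, u) = tangent_lift gamma t.

(** Homotopy of tangent lifts through tangent lifts of immersed closed curves,
    inside T^1 S^2 minus the tangent lift of gamma. *)
Definition tl_homotopic (c0 c1 : R -> V3) : Prop :=
  exists H : R -> R -> V3,
    (forall s, 0 <= s <= 1 -> closed_immersed_S2 (H s)) /\
    (forall t, H 0 t = c0 t) /\ (forall t, H 1 t = c1 t) /\
    cont01_V3 H /\ cont01_V3 (fun s t => unit_tangent (H s) t) /\
    (forall s t, 0 <= s <= 1 -> ~ in_lift_gamma (H s t) (unit_tangent (H s) t)).

Definition expS2 (x v : V3) : V3 :=
  if Req_EM_T (norm3 v) 0 then x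
  else add3 (scal3 (cos (norm3 v)) x) (scal3 (sin (norm3 v) / norm3 v) v).

Definition unit_normal_field_gamma (eta : R -> V3) : Prop :=
  (forall t, dot3 (eta t) (gamma t) = 0) /\
  (forall t, dot3 (eta t) (dcurve gamma t) = 0) /\
  (forall t, norm3 (eta t) = 1) /\
  (forall t, eta (t + 2 * PI) = eta t) /\
  smooth_fun (fun t => v3x (eta t)) /\ smooth_fun (fun t => v3y (eta t)) /\
  smooth_fun (fun t => v3z (eta t)).

Definition sat_model (eta : R -> V3) (p q : nat) (eps : R) (t : R) : V3 :=
  expS2 (gamma (INR p * t)) (scal3 (eps * sin (INR q * t)) (eta (INR p * t))).

Definition is_satellite (eta : R -> V3) (p q : nat) (c : R -> V3) : Prop :=
  closed_immersed_S2 c /\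
  exists eps0, 0 < eps0 /\
    forall eps, 0 < eps < eps0 -> tl_homotopic c (sat_model eta p q eps).

(** * S^3 in C^2 = R^4: a point is ((Re z1, Im z1), (Re z2, Im z2)) *)
Definition V4 := ((R * R) * (R * R))%type.
Definition on_S3 (w : V4) : Prop :=
  let '((a, b), (c, d)) := w in a * a + b * b + c * c + d * d = 1.

(** The 2:1 covering l : S^3 -> T^1 S^2 (smooth extension of Phi1^{-1} o Phi2),
    written in closed form: with z1 = a+ib, z2 = c+id,
    basepoint = (Re(z1^2+z2^2), Im(z1^2+z2^2), 2 Im(z1 conj z2)),
    direction = (Im(z2^2) - Im(z1^2), Re(z1^2) - Re(z2^2), 2 Re(z1 conj z2)). *)
Definition lmap (w : V4) : V3 * V3 :=
  let '((a, b), (c, d)) := w in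
  ((a*a - b*b + c*c - d*d, 2*a*b + 2*c*d, 2*(b*c - a*d)),
   (2*c*d - 2*a*b, a*a - b*b - c*c + d*d, 2*(a*c + b*d))).

Definition loop_homotopic_S3_minus (T : R) (a b : R -> V4) : Prop :=
  exists G : R -> R -> V4,
    cont01 (fun s t => fst (fst (G s t))) /\ cont01 (fun s t => snd (fst (G s t))) /\
    cont01 (fun s t => fst (snd (G s t))) /\ cont01 (fun s t => snd (snd (G s t))) /\
    (forall t, G 0 t = a t) /\ (forall t, G 1 t = b t) /\
    (forall s t, 0 <= s <= 1 -> G s (t + T) = G s t) /\
    (forall s t, 0 <= s <= 1 -> on_S3 (G s t) /\ snd (G s t) <> (0, 0)).

Definition torus_curve (c1 c2 : R) (p q : nat) (t : R) : V4 :=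
  ((c1 * cos (INR p * t / 2), c1 * sin (INR p * t / 2)),
   (c2 * cos ((INR p - 2 * INR q) * t / 2), c2 * sin ((INR p - 2 * INR q) * t / 2))).

(* The gap [gap(x, u) = (x1 - u2) + i (x2 + u1)] of a unit tangent vector [u] at [x] on S^2
   vanishes exactly on the tangent lift of the equator [gamma], so its winding number along a
   closed curve is invariant under homotopies through tangent lifts avoiding that of [gamma].
   For the model satellite [t |-> exp_{gamma(pt)}(eps sin(qt) (+-e3))] it equals [p - 2q], computed
   by comparing the gap with simpler loops having positive inner product with it.  Along the
   covering [l] the gap is [2 z2^2], so along a lift [sigma] the coordinate [z2] turns by
   [pi (p - 2q)] while [t] runs over [[0, 2 pi]]; as [l] is 2:1 this forces
   [sigma (t + 2 pi) = (-1)^p sigma t].  Finally [sigma] is deformed into the torus curve by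
   interpolating [z1] linearly and [z2] in polar coordinates along a continuous angle lift, so
   that [z2] never vanishes. *)

From Stdlib Require Import Reals Lra ZArith.
From Stdlib Require Import FunctionalExtensionality ClassicalEpsilon Classical.
From Coquelicot Require Import Coquelicot.
Open Scope R_scope.

Lemma continuity_pt_Rabs f x : continuity_pt f x <->
  forall e, 0 < e -> exists d, 0 < d /\ forall y, Rabs (y - x) < d -> Rabs (f y - f x) < e.
Proof.
  split.
  - intros H e He. destruct (H e He) as [d [Hd Hf]]. exists d; split; [exact Hd|].
    intros y Hy. destruct (Req_dec y x) as [->|Hne].
    + rewrite Rminus_diag, Rabs_R0; exact He.
    + apply (Hf y). split; [split; [exact I|auto]|exact Hy].
  - intros H e He. destruct (H e He) as [d [Hd Hf]]. exists d; split; [exact Hd|].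
    intros y [_ Hy]. apply Hf, Hy.
Qed.

Lemma continuity_pt_const' c x : continuity_pt (fun _ => c) x.
Proof. apply continuity_pt_const. intros a b; reflexivity. Qed.
Lemma continuity_pt_id' x : continuity_pt (fun t => t) x.
Proof. apply derivable_continuous_pt, derivable_pt_id. Qed.
Lemma continuity_pt_plus' f g x : continuity_pt f x -> continuity_pt g x ->
  continuity_pt (fun t => f t + g t) x.
Proof. apply continuity_pt_plus. Qed.
Lemma continuity_pt_minus' f g x : continuity_pt f x -> continuity_pt g x ->
  continuity_pt (fun t => f t - g t) x.
Proof. apply continuity_pt_minus. Qed.
Lemma continuity_pt_mult' f g x : continuity_pt f x -> continuity_pt g x ->
  continuity_pt (fun t => f t * g t) x.
Proof. apply continuity_pt_mult. Qed.
Lemma continuity_pt_opp' f x : continuity_pt f x -> continuity_pt (fun t => - f t) x.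
Proof. apply continuity_pt_opp. Qed.
Lemma continuity_pt_comp' f g x : continuity_pt f x -> continuity_pt g (f x) ->
  continuity_pt (fun t => g (f t)) x.
Proof. apply continuity_pt_comp. Qed.
Lemma continuity_pt_cos' f x : continuity_pt f x -> continuity_pt (fun t => cos (f t)) x.
Proof. intros Hf. apply continuity_pt_comp'; [exact Hf|apply continuity_cos]. Qed.
Lemma continuity_pt_sin' f x : continuity_pt f x -> continuity_pt (fun t => sin (f t)) x.
Proof. intros Hf. apply continuity_pt_comp'; [exact Hf|apply continuity_sin]. Qed.
Lemma continuity_pt_atan' f x : continuity_pt f x -> continuity_pt (fun t => atan (f t)) x.
Proof.
  intros Hf. apply continuity_pt_comp'; [exact Hf|].
  apply derivable_continuous_pt, derivable_pt_atan.
Qed.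
Lemma continuity_pt_div' f g x : continuity_pt f x -> continuity_pt g x -> g x <> 0 ->
  continuity_pt (fun t => f t / g t) x.
Proof.
  intros Hf Hg Hgx. apply continuity_pt_mult'; [exact Hf|].
  apply (continuity_pt_inv g x Hg Hgx).
Qed.
Lemma continuity_pt_sqrt' f x : continuity_pt f x -> 0 < f x ->
  continuity_pt (fun t => sqrt (f t)) x.
Proof. intros Hf Hpos. apply continuity_pt_comp'; [exact Hf|apply sqrt_continuity_pt, Hpos]. Qed.

Ltac continuity_pt_auto :=
  repeat first
    [ apply continuity_pt_const' | apply continuity_pt_id' | apply continuity_pt_plus'
    | apply continuity_pt_minus' | apply continuity_pt_mult' | apply continuity_pt_opp'
    | apply continuity_pt_cos' | apply continuity_pt_sin' | apply continuity_pt_atan' ].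

Lemma continuity_pt_shift f P x : continuity f -> continuity_pt (fun t => f (t + P)) x.
Proof. intros Hf. apply continuity_pt_comp'; [continuity_pt_auto|apply Hf]. Qed.

Lemma ex_derive_continuity_pt f x : ex_derive f x -> continuity_pt f x.
Proof.
  intros H. apply continuity_pt_filterlim.
  exact (@ex_derive_continuous R_AbsRing R_NormedModule f x H).
Qed.

(** Connectedness of [[a, b]] in the form of an induction principle. *)
Lemma interval_ind (a b : R) (P : R -> Prop) : a <= b -> P a ->
  (forall x, a <= x <= b -> exists d, 0 < d /\ forall y z, x - d < y -> y <= z -> z < x + d ->
      a <= y -> z <= b -> P y -> P z) -> P b.
Proof.
  intros Hab Pa Hloc.
  set (E := fun x => a <= x <= b /\ forall y, a <= y <= x -> P y).
  assert (HEa : E a) by (split; [lra|intros y Hy; replace y with a by lra; exact Pa]).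
  assert (Hb : bound E) by (exists b; intros x [Hx _]; lra).
  destruct (completeness E Hb (ex_intro _ a HEa)) as [c [Hub Hlub]].
  assert (Hac : a <= c) by (apply Hub; exact HEa).
  assert (Hcb : c <= b) by (apply Hlub; intros x [Hx _]; lra).
  destruct (Hloc c (conj Hac Hcb)) as [d [Hd Hl]].
  assert (Hex : exists x0, E x0 /\ c - d < x0).
  { apply NNPP. intro Hn.
    assert (c <= c - d); [|lra].
    apply Hlub. intros x Ex. apply Rnot_lt_le. intro Hlt. apply Hn. exists x; auto. }
  destruct Hex as [x0 [[Hx0 HPx0] Hlt]].
  assert (Hx0c : x0 <= c) by (apply Hub; split; auto).
  set (z0 := Rmin b (c + d / 2)).
  assert (Hz0b : z0 <= b) by apply Rmin_l.
  assert (Hz0c' : z0 <= c + d / 2) by apply Rmin_r.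
  assert (HEz : E z0).
  { split; [split; [apply Rmin_glb; lra|exact Hz0b]|].
    intros y Hy. destruct (Rle_dec y x0) as [Hyx|Hyx].
    - apply HPx0. lra.
    - apply (Hl x0 y); try lra. apply HPx0; lra. }
  assert (Hz0c : z0 <= c) by (apply Hub; exact HEz).
  assert (z0 = b) by (unfold z0, Rmin in *; destruct (Rle_dec b (c + d/2)); lra).
  destruct HEz as [_ HP]. apply HP. lra.
Qed.

(** * Polar angles and their continuous lifts *)

Lemma sin_sq_add_cos_sq a : sin a * sin a + cos a * cos a = 1.
Proof. exact (sin2_cos2 a). Qed.

Lemma cos_eq_1_sin_eq_0 d : cos d = 1 -> sin d = 0.
Proof. intros H. assert (Hs := sin_sq_add_cos_sq d). rewrite H in Hs. nra. Qed.

Definition is_arg (x y a : R) := exists r, 0 < r /\ x = r * cos a /\ y = r * sin a.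

Lemma polar_norm_sq x y a r : x = r * cos a -> y = r * sin a -> x * x + y * y = r * r.
Proof.
  intros -> ->. transitivity (r * r * (sin a * sin a + cos a * cos a)); [ring|].
  rewrite sin_sq_add_cos_sq. ring.
Qed.

Lemma is_arg_norm_pos x y a : is_arg x y a -> 0 < x * x + y * y.
Proof. intros [r [Hr [Hx Hy]]]. rewrite (polar_norm_sq x y a r Hx Hy). nra. Qed.

Lemma is_arg_cos_sub x y a b : is_arg x y a -> is_arg x y b -> cos (a - b) = 1.
Proof.
  intros [r [Hr [Hx Hy]]] [r' [Hr' [Hx' Hy']]].
  assert (r = r') by (assert (E := polar_norm_sq x y a r Hx Hy);
                      assert (E' := polar_norm_sq x y b r' Hx' Hy'); nra).
  subst r'. rewrite cos_minus.
  apply Rmult_eq_reg_l with (r * r); [|nra].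
  replace (r * r * (cos a * cos b + sin a * sin b))
    with (r * cos a * (r * cos b) + r * sin a * (r * sin b)) by ring.
  rewrite <- Hx, <- Hx', <- Hy, <- Hy'. rewrite Rmult_1_r. exact (polar_norm_sq x y a r Hx Hy).
Qed.

Lemma is_arg_shift x y a d : is_arg x y a -> cos d = 1 -> is_arg x y (a + d).
Proof.
  intros [r [Hr [Hx Hy]]] Hd. exists r. split; [exact Hr|].
  rewrite cos_plus, sin_plus, Hd, (cos_eq_1_sin_eq_0 _ Hd). split; [rewrite Hx|rewrite Hy]; ring.
Qed.

Lemma is_arg_mul x1 y1 a x2 y2 b : is_arg x1 y1 a -> is_arg x2 y2 b ->
  is_arg (x1 * x2 - y1 * y2) (x1 * y2 + y1 * x2) (a + b).
Proof.
  intros [r [Hr [Hx Hy]]] [r' [Hr' [Hx' Hy']]]. exists (r * r'). split; [nra|].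
  rewrite cos_plus, sin_plus, Hx, Hy, Hx', Hy'. split; ring.
Qed.

Lemma is_arg_rotate x y a f : is_arg x y a ->
  is_arg (cos f * x - sin f * y) (sin f * x + cos f * y) (a + f).
Proof.
  intros [r [Hr [Hx Hy]]]. exists r. split; [exact Hr|].
  rewrite cos_plus, sin_plus, Hx, Hy. split; ring.
Qed.

Lemma rotate_norm_sq f x y :
  (cos f * x - sin f * y) * (cos f * x - sin f * y) + (sin f * x + cos f * y) * (sin f * x + cos f * y)
  = x * x + y * y.
Proof.
  transitivity ((x * x + y * y) * (sin f * sin f + cos f * cos f)); [ring|].
  rewrite sin_sq_add_cos_sq. ring.
Qed.

Lemma is_arg_scale x y a k : 0 < k -> is_arg x y a -> is_arg (k * x) (k * y) a.
Proof. intros Hk [r [Hr [Hx Hy]]]. exists (k * r). split; [nra|]. rewrite Hx, Hy. split; ring. Qed.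

Lemma is_arg_unscale x y a k : 0 < k -> is_arg (k * x) (k * y) a -> is_arg x y a.
Proof.
  intros Hk H. replace x with (/ k * (k * x)) by (field; lra).
  replace y with (/ k * (k * y)) by (field; lra).
  apply is_arg_scale; [apply Rinv_0_lt_compat, Hk|exact H].
Qed.

Lemma is_arg_ext x y a x' y' : is_arg x y a -> x = x' -> y = y' -> is_arg x' y' a.
Proof. intros H <- <-; exact H. Qed.

Lemma is_arg_atan x y : 0 < x -> is_arg x y (atan (y / x)).
Proof.
  intros Hx. set (u := y / x).
  assert (Hs : 0 < sqrt (1 + u²)) by (apply sqrt_lt_R0; unfold Rsqr; nra).
  exists (x * sqrt (1 + u²)). split; [nra|].
  rewrite cos_atan, sin_atan. split; unfold u; field; repeat split; apply Rgt_not_eq; assumption.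
Qed.

Lemma is_arg_exists x y : 0 < x * x + y * y -> exists a, is_arg x y a.
Proof.
  intros H. destruct (Rtotal_order 0 x) as [Hx|[Hx|Hx]].
  - exists (atan (y / x)). apply is_arg_atan, Hx.
  - subst x. destruct (Rtotal_order 0 y) as [Hy|[Hy|Hy]]; [| subst; lra |].
    + exists (PI / 2), y. rewrite cos_PI2, sin_PI2. repeat split; [exact Hy|ring|ring].
    + exists (- (PI / 2)), (- y). rewrite cos_neg, sin_neg, cos_PI2, sin_PI2.
      repeat split; [lra|ring|ring].
  - exists (atan (- y / - x) + PI).
    assert (Hrot := is_arg_rotate _ _ _ PI (is_arg_atan (- x) (- y) ltac:(lra))).
    rewrite cos_PI, sin_PI in Hrot. eapply is_arg_ext; [exact Hrot|ring|ring].
Qed.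

(** The angle from [(x0, y0)] to [(x, y)], as [atan] of cross product over inner product;
    valid when the inner product is positive. *)
Definition arg_correction (x0 y0 x y : R) := atan ((y * x0 - x * y0) / (x * x0 + y * y0)).

Lemma is_arg_correction x0 y0 a x y : is_arg x0 y0 a -> 0 < x * x0 + y * y0 ->
  is_arg x y (a + arg_correction x0 y0 x y).
Proof.
  intros H Hp.
  apply (is_arg_unscale _ _ _ (x0 * x0 + y0 * y0) (is_arg_norm_pos _ _ _ H)).
  eapply is_arg_ext; [apply (is_arg_mul _ _ _ _ _ _ H (is_arg_atan _ (y * x0 - x * y0) Hp))| |];
    ring.
Qed.

Lemma continuity_pt_arg_correction fx0 fy0 fx fy t :
  continuity_pt fx0 t -> continuity_pt fy0 t -> continuity_pt fx t -> continuity_pt fy t ->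
  0 < fx t * fx0 t + fy t * fy0 t ->
  continuity_pt (fun u => arg_correction (fx0 u) (fy0 u) (fx u) (fy u)) t.
Proof.
  intros. unfold arg_correction. apply continuity_pt_atan', continuity_pt_div';
    [| |lra]; continuity_pt_auto; assumption.
Qed.

Lemma cos_lt_1 h : 0 < h <= PI -> cos h < 1.
Proof.
  intros Hh. replace h with (2 * (h / 2)) by field. rewrite cos_2a_sin.
  assert (0 < sin (h / 2)) by (apply sin_gt_0; lra). nra.
Qed.

Lemma continuous_cos_eq_1_const g : continuity g -> (forall t, cos (g t) = 1) ->
  forall t, g t = g 0.
Proof.
  intros Hc H t. apply NNPP. intro Hne.
  assert (Hcase : exists u v, g u < g v).
  { destruct (Rlt_le_dec (g t) (g 0)); [exists t, 0|exists 0, t]; lra. }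
  destruct Hcase as [u [v Huv]].
  set (h := Rmin PI ((g v - g u) / 2)).
  assert (Hh : 0 < h <= PI) by (split; [apply Rmin_glb_lt; [apply PI_RGT_0|lra]|apply Rmin_l]).
  assert (Hh2 : h <= (g v - g u) / 2) by apply Rmin_r.
  set (f := fun s => g s - (g u + h)).
  assert (Hf : continuity f) by (intro x; apply continuity_pt_minus'; [apply Hc|continuity_pt_auto]).
  assert (Hprod : f (Rmin u v) * f (Rmax u v) <= 0)
    by (unfold f, Rmin, Rmax; destruct (Rle_dec u v); nra).
  destruct (IVT_cor f (Rmin u v) (Rmax u v) Hf (Rmin_Rmax u v) Hprod) as [z [_ Hz]].
  assert (Hcz := H z). replace (g z) with (g u + h) in Hcz by (unfold f in Hz; lra).
  rewrite cos_plus, (H u), (cos_eq_1_sin_eq_0 _ (H u)) in Hcz.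
  assert (cos h < 1) by (apply cos_lt_1, Hh). lra.
Qed.

Lemma continuous_sign_const g : continuity g -> (forall t, g t = 1 \/ g t = -1) ->
  forall t, g t = g 0.
Proof.
  intros Hc H t. apply NNPP. intro Hne.
  assert (Hprod : g (Rmin t 0) * g (Rmax t 0) <= 0).
  { unfold Rmin, Rmax. destruct (Rle_dec t 0); destruct (H t); destruct (H 0); nra. }
  destruct (IVT_cor g _ _ Hc (Rmin_Rmax t 0) Hprod) as [z [_ Hz]].
  destruct (H z); lra.
Qed.

Definition clamp (a b t : R) := Rmax a (Rmin t b).

Lemma continuity_clamp a b : continuity (clamp a b).
Proof.
  intro x. apply continuity_pt_Rabs. intros e He. exists e. split; [exact He|]. intros y Hy.
  eapply Rle_lt_trans; [|exact Hy].
  unfold clamp, Rmax, Rmin. destruct (Rle_dec y b); destruct (Rle_dec x b);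
  repeat match goal with |- context [Rle_dec ?u ?v] => destruct (Rle_dec u v) end;
  unfold Rabs; repeat match goal with |- context [Rcase_abs ?u] => destruct (Rcase_abs u) end;
  lra.
Qed.

Lemma clamp_bounds a b t : a <= b -> a <= clamp a b t <= b.
Proof. intros. unfold clamp, Rmax, Rmin. repeat destruct Rle_dec; lra. Qed.

Lemma clamp_id a b t : a <= t <= b -> clamp a b t = t.
Proof. intros. unfold clamp, Rmax, Rmin. repeat destruct Rle_dec; lra. Qed.

Lemma continuity_clamp_comp f a b : continuity f -> continuity (fun t => f (clamp a b t)).
Proof. intros Hf x. apply continuity_pt_comp'; [apply continuity_clamp|apply Hf]. Qed.

Lemma is_arg_lift_unique fx fy a b th1 th2 : a <= b -> continuity th1 -> continuity th2 ->
  (forall t, a <= t <= b -> is_arg (fx t) (fy t) (th1 t)) ->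
  (forall t, a <= t <= b -> is_arg (fx t) (fy t) (th2 t)) ->
  forall t1 t2, a <= t1 <= b -> a <= t2 <= b -> th1 t1 - th2 t1 = th1 t2 - th2 t2.
Proof.
  intros Hab H1 H2 L1 L2 t1 t2 Ht1 Ht2.
  set (g := fun t => th1 (clamp a b t) - th2 (clamp a b t)).
  assert (Hg : continuity g)
    by (intro x; apply continuity_pt_minus'; apply continuity_clamp_comp; assumption).
  assert (Hc : forall t, cos (g t) = 1).
  { intro t. apply (is_arg_cos_sub (fx (clamp a b t)) (fy (clamp a b t)));
      [apply L1|apply L2]; apply clamp_bounds, Hab. }
  assert (E1 := continuous_cos_eq_1_const g Hg Hc t1).
  assert (E2 := continuous_cos_eq_1_const g Hg Hc t2).
  unfold g in E1, E2. rewrite clamp_id in E1, E2 by assumption. lra.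
Qed.

Lemma inner_pos_near X Y : 0 < X * X + Y * Y -> exists e, 0 < e /\
  forall a1 b1 a2 b2, Rabs a1 < e -> Rabs b1 < e -> Rabs a2 < e -> Rabs b2 < e ->
  0 < (X + a1) * (X + a2) + (Y + b1) * (Y + b2).
Proof.
  intros HD. set (D := X * X + Y * Y) in HD.
  set (e := Rmin 1 (D / 20)).
  assert (He : 0 < e) by (apply Rmin_glb_lt; lra).
  assert (HeD : 20 * (e * e) <= D)
    by (unfold e, Rmin; destruct (Rle_dec 1 (D / 20)); nra).
  exists e. split; [exact He|]. intros a1 b1 a2 b2 H1 H2 H3 H4.
  apply Rabs_def2 in H1, H2, H3, H4.
  assert (0 <= (X / 2 + (a1 + a2)) * (X / 2 + (a1 + a2))) by apply Rle_0_sqr.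
  assert (0 <= (Y / 2 + (b1 + b2)) * (Y / 2 + (b1 + b2))) by apply Rle_0_sqr.
  assert ((a1 + a2) * (a1 + a2) <= 4 * (e * e)) by nra.
  assert ((b1 + b2) * (b1 + b2) <= 4 * (e * e)) by nra.
  assert (- (e * e) <= a1 * a2) by nra.
  assert (- (e * e) <= b1 * b2) by nra.
  unfold D in HeD. nra.
Qed.

Lemma continuity_glue g1 g2 y : continuity g1 -> continuity g2 -> g1 y = g2 y ->
  continuity (fun t => if Rle_dec t y then g1 t else g2 t).
Proof.
  intros H1 H2 Hy x. apply continuity_pt_Rabs. intros e He.
  destruct (proj1 (continuity_pt_Rabs _ _) (H1 x) e He) as [d1 [Hd1 D1]].
  destruct (proj1 (continuity_pt_Rabs _ _) (H2 x) e He) as [d2 [Hd2 D2]].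
  exists (Rmin (Rmin d1 d2) (if Req_EM_T x y then 1 else Rabs (x - y))).
  split.
  { apply Rmin_glb_lt; [apply Rmin_glb_lt; lra|].
    destruct (Req_EM_T x y); [lra|apply Rabs_pos_lt; lra]. }
  intros t Ht.
  assert (Hd := Rmin_l (Rmin d1 d2) (if Req_EM_T x y then 1 else Rabs (x - y))).
  assert (Hs := Rmin_r (Rmin d1 d2) (if Req_EM_T x y then 1 else Rabs (x - y))).
  assert (Ht1 : Rabs (t - x) < d1) by (assert (H := Rmin_l d1 d2); lra).
  assert (Ht2 : Rabs (t - x) < d2) by (assert (H := Rmin_r d1 d2); lra).
  destruct (Req_EM_T x y) as [<-|Hxy].
  - destruct (Rle_dec x x); [|lra]. destruct (Rle_dec t x); [auto|]. rewrite Hy. auto.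
  - assert (Hsep : Rabs (t - x) < Rabs (x - y)) by lra.
    unfold Rabs in Hsep; repeat destruct Rcase_abs in Hsep;
    destruct (Rle_dec t y); destruct (Rle_dec x y); auto; lra.
Qed.

Lemma is_arg_lift_extend fx fy a y z th : a <= y <= z -> continuity fx -> continuity fy ->
  continuity th -> (forall t, a <= t <= y -> is_arg (fx t) (fy t) (th t)) ->
  (forall t, y <= t <= z -> 0 < fx t * fx y + fy t * fy y) ->
  exists th', continuity th' /\ forall t, a <= t <= z -> is_arg (fx t) (fy t) (th' t).
Proof.
  intros Hayz Cx Cy Cth Hth Hpos.
  set (P1 := fun t => fx (clamp y z t) * fx y + fy (clamp y z t) * fy y).
  set (P2 := fun t => fy (clamp y z t) * fx y - fx (clamp y z t) * fy y).
  assert (HP1 : forall t, 0 < P1 t) by (intro t; apply Hpos, clamp_bounds; lra).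
  assert (CP1 : continuity P1)
    by (intro t; unfold P1; continuity_pt_auto; apply continuity_clamp_comp; assumption).
  assert (CP2 : continuity P2)
    by (intro t; unfold P2; continuity_pt_auto; apply continuity_clamp_comp; assumption).
  exists (fun t => if Rle_dec t y then th t else th y + atan (P2 t / P1 t)). split.
  - apply continuity_glue; [exact Cth| |].
    + intro t. apply continuity_pt_plus'; [apply continuity_pt_const'|].
      apply continuity_pt_atan', continuity_pt_div'; [apply CP2|apply CP1|].
      apply Rgt_not_eq, HP1.
    + unfold P2. rewrite clamp_id by lra.
      replace (fy y * fx y - fx y * fy y) with 0 by ring.
      rewrite Rdiv_0_l, atan_0. ring.
  - intros t Ht. destruct (Rle_dec t y) as [Hty|Hty]; [apply Hth; lra|].
    specialize (HP1 t). unfold P1, P2 in *. rewrite clamp_id in * by lra.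
    apply (is_arg_correction _ _ _ _ _ (Hth y ltac:(lra)) HP1).
Qed.

Lemma is_arg_lift_interval fx fy a b : a <= b -> continuity fx -> continuity fy ->
  (forall t, 0 < fx t * fx t + fy t * fy t) ->
  exists th, continuity th /\ forall t, a <= t <= b -> is_arg (fx t) (fy t) (th t).
Proof.
  intros Hab Cx Cy Hnz.
  apply (interval_ind a b (fun x => exists th, continuity th /\
           forall t, a <= t <= x -> is_arg (fx t) (fy t) (th t))); [exact Hab| |].
  - destruct (is_arg_exists _ _ (Hnz a)) as [al Hal]. exists (fun _ => al).
    split; [intro x; apply continuity_pt_const'|].
    intros t Ht. replace t with a by lra. exact Hal.
  - intros x Hx. destruct (inner_pos_near _ _ (Hnz x)) as [e [He Hnear]].
    destruct (proj1 (continuity_pt_Rabs _ _) (Cx x) e He) as [d1 [Hd1 D1]].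
    destruct (proj1 (continuity_pt_Rabs _ _) (Cy x) e He) as [d2 [Hd2 D2]].
    assert (Hm1 := Rmin_l d1 d2). assert (Hm2 := Rmin_r d1 d2).
    exists (Rmin d1 d2). split; [apply Rmin_glb_lt; lra|].
    intros y z Hy Hyz Hz Hay Hzb [th [Cth Hth]].
    apply (is_arg_lift_extend fx fy a y z th); auto.
    intros t Ht.
    replace (fx t) with (fx x + (fx t - fx x)) by ring.
    replace (fy t) with (fy x + (fy t - fy x)) by ring.
    replace (fx y) with (fx x + (fx y - fx x)) by ring.
    replace (fy y) with (fy x + (fy y - fy x)) by ring.
    apply Hnear; [apply D1|apply D2|apply D1|apply D2]; apply Rabs_def1; lra.
Qed.

Definition nat_ceil (x : R) : nat := Z.to_nat (up x).

Lemma nat_ceil_ge x : 0 <= x -> x <= INR (nat_ceil x).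
Proof.
  intros Hx. unfold nat_ceil. destruct (archimed x) as [H1 _].
  assert (Hpos : (0 <= up x)%Z) by (apply le_IZR; lra).
  rewrite INR_IZR_INZ, Z2Nat.id by exact Hpos. lra.
Qed.

Lemma continuity_patch (F : nat -> R -> R) : (forall n, continuity (F n)) ->
  (forall n m t, Rabs t <= Rmin (INR n) (INR m) + 1 -> F n t = F m t) ->
  continuity (fun t => F (nat_ceil (Rabs t)) t).
Proof.
  intros CF Hagree.
  assert (Hpatch : forall n t, Rabs t <= INR n + 1 -> F (nat_ceil (Rabs t)) t = F n t).
  { intros n t Ht. apply Hagree. assert (H := nat_ceil_ge _ (Rabs_pos t)).
    unfold Rmin. destruct Rle_dec; lra. }
  intro x. set (m := nat_ceil (Rabs x + 1)).
  assert (Hm : Rabs x + 1 <= INR m) by (apply nat_ceil_ge; assert (H := Rabs_pos x); lra).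
  apply continuity_pt_Rabs. intros e He.
  destruct (proj1 (continuity_pt_Rabs _ _) (CF m x) e He) as [d [Hd D]].
  exists (Rmin d 1). split; [apply Rmin_glb_lt; lra|].
  intros y Hy. assert (Hy1 := Rmin_l d 1). assert (Hy2 := Rmin_r d 1).
  assert (Hyx : Rabs y <= Rabs x + Rabs (y - x))
    by (replace y with (x + (y - x)) at 1 by ring; apply Rabs_triang).
  rewrite (Hpatch m y), (Hpatch m x) by lra. apply D. lra.
Qed.

Lemma is_arg_lift_exists fx fy : continuity fx -> continuity fy ->
  (forall t, 0 < fx t * fx t + fy t * fy t) ->
  exists th, continuity th /\ forall t, is_arg (fx t) (fy t) (th t).
Proof.
  intros Cx Cy Hnz.
  destruct (is_arg_exists _ _ (Hnz 0)) as [al Hal].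
  assert (Hn : forall n : nat, exists th, continuity th /\
     (forall t, Rabs t <= INR n + 1 -> is_arg (fx t) (fy t) (th t)) /\ th 0 = al).
  { intro n. assert (Hn0 := pos_INR n).
    destruct (is_arg_lift_interval fx fy (- INR n - 1) (INR n + 1) ltac:(lra) Cx Cy Hnz)
      as [th [Cth Hth]].
    exists (fun t => th t + (al - th 0)). split; [|split; [|ring]].
    - intro x. apply continuity_pt_plus'; [apply Cth|apply continuity_pt_const'].
    - intros t Ht. apply Rabs_le_between in Ht. apply is_arg_shift; [apply Hth; lra|].
      apply (is_arg_cos_sub (fx 0) (fy 0)); [exact Hal|apply Hth; lra]. }
  destruct (choice _ Hn) as [TH HTH].
  assert (Hagree : forall n m t, Rabs t <= Rmin (INR n) (INR m) + 1 -> TH n t = TH m t).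
  { intros n m t Ht. destruct (HTH n) as [C1 [L1 E1]]. destruct (HTH m) as [C2 [L2 E2]].
    set (r := Rmin (INR n) (INR m) + 1) in Ht.
    assert (Hr := Rmin_glb (INR n) (INR m) 0 (pos_INR n) (pos_INR m)).
    assert (Hmn := Rmin_l (INR n) (INR m)). assert (Hmm := Rmin_r (INR n) (INR m)).
    apply Rabs_le_between in Ht.
    assert (E := is_arg_lift_unique fx fy (- r) r (TH n) (TH m) ltac:(unfold r; lra) C1 C2
      ltac:(intros s Hs; apply L1, Rabs_le_between; unfold r in Hs; lra)
      ltac:(intros s Hs; apply L2, Rabs_le_between; unfold r in Hs; lra)
      t 0 ltac:(lra) ltac:(unfold r; lra)).
    rewrite E1, E2 in E. lra. }
  exists (fun t => TH (nat_ceil (Rabs t)) t).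
  split; [exact (continuity_patch TH (fun n => proj1 (HTH n)) Hagree)|].
  intro t. apply (proj1 (proj2 (HTH _))). assert (H := nat_ceil_ge _ (Rabs_pos t)). lra.
Qed.

(** * Winding numbers under homotopy *)

Lemma cont01_comp_pt h F : (forall s t, 0 <= s <= 1 -> continuity_pt h (F s t)) -> cont01 F ->
  cont01 (fun s t => h (F s t)).
Proof.
  intros Hh HF s t Hs e He.
  destruct (proj1 (continuity_pt_Rabs _ _) (Hh s t Hs) e He) as [d [Hd D]].
  destruct (HF s t Hs d Hd) as [d' [Hd' D']].
  exists d'. split; [exact Hd'|]. intros s' t' Hs' H1 H2. apply D, D'; assumption.
Qed.

Lemma cont01_comp h F : continuity h -> cont01 F -> cont01 (fun s t => h (F s t)).
Proof. intros Hh. apply cont01_comp_pt. intros; apply Hh. Qed.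

Lemma cont01_t g : continuity g -> cont01 (fun _ t => g t).
Proof.
  intros Hg s t Hs e He. destruct (proj1 (continuity_pt_Rabs _ _) (Hg t) e He) as [d [Hd D]].
  exists d. split; [exact Hd|]. intros. apply D. assumption.
Qed.

Lemma cont01_s : cont01 (fun s _ => s).
Proof. intros s t Hs e He. exists e. split; auto. Qed.

Lemma cont01_const c : cont01 (fun _ _ => c).
Proof. intros s t Hs e He. exists 1. split; [lra|]. intros. rewrite Rminus_diag, Rabs_R0; exact He. Qed.

Lemma cont01_plus F G : cont01 F -> cont01 G -> cont01 (fun s t => F s t + G s t).
Proof.
  intros HF HG s t Hs e He.
  destruct (HF s t Hs (e / 2) ltac:(lra)) as [d1 [Hd1 D1]].
  destruct (HG s t Hs (e / 2) ltac:(lra)) as [d2 [Hd2 D2]].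
  exists (Rmin d1 d2). split; [apply Rmin_glb_lt; lra|].
  intros s' t' Hs' H1 H2. assert (Hm1 := Rmin_l d1 d2). assert (Hm2 := Rmin_r d1 d2).
  replace (F s' t' + G s' t' - (F s t + G s t)) with ((F s' t' - F s t) + (G s' t' - G s t)) by ring.
  eapply Rle_lt_trans; [apply Rabs_triang|].
  assert (Rabs (F s' t' - F s t) < e / 2) by (apply D1; auto; lra).
  assert (Rabs (G s' t' - G s t) < e / 2) by (apply D2; auto; lra). lra.
Qed.

Lemma cont01_opp F : cont01 F -> cont01 (fun s t => - F s t).
Proof.
  intros HF. apply (cont01_comp (fun x => - x)); [|exact HF].
  intro x. apply continuity_pt_opp', continuity_pt_id'.
Qed.

Lemma cont01_minus F G : cont01 F -> cont01 G -> cont01 (fun s t => F s t - G s t).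
Proof. intros. apply cont01_plus; [|apply cont01_opp]; assumption. Qed.

(** Products reduce to sums and the continuous map [x |-> x^2/4] by polarization. *)
Lemma cont01_mult F G : cont01 F -> cont01 G -> cont01 (fun s t => F s t * G s t).
Proof.
  intros HF HG.
  set (sq := fun x => x * x / 4).
  assert (Hsq : continuity sq) by (intro x; unfold sq, Rdiv; continuity_pt_auto).
  replace (fun s t => F s t * G s t) with (fun s t => sq (F s t + G s t) - sq (F s t - G s t)).
  - apply cont01_minus; apply (cont01_comp sq); auto;
      [apply cont01_plus|apply cont01_minus]; assumption.
  - apply functional_extensionality; intro s; apply functional_extensionality; intro t.
    unfold sq. field.
Qed.

Lemma cont01_div F G : cont01 F -> cont01 G -> (forall s t, 0 <= s <= 1 -> G s t <> 0) ->
  cont01 (fun s t => F s t / G s t).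
Proof.
  intros HF HG Hn. apply cont01_mult; [exact HF|].
  apply (cont01_comp_pt Rinv G); [|exact HG].
  intros s t Hs. apply (continuity_pt_inv (fun x => x)); [apply continuity_pt_id'|apply Hn, Hs].
Qed.

Lemma cont01_sqrt F : cont01 F -> (forall s t, 0 <= s <= 1 -> 0 < F s t) ->
  cont01 (fun s t => sqrt (F s t)).
Proof. intros HF Hp. apply (cont01_comp_pt sqrt F); [|exact HF]. intros. apply sqrt_continuity_pt; auto. Qed.

Lemma cont01_cos F : cont01 F -> cont01 (fun s t => cos (F s t)).
Proof. apply cont01_comp, continuity_cos. Qed.

Lemma cont01_sin F : cont01 F -> cont01 (fun s t => sin (F s t)).
Proof. apply cont01_comp, continuity_sin. Qed.

Lemma cont01_slice F s : cont01 F -> 0 <= s <= 1 -> continuity (F s).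
Proof.
  intros H Hs t. apply continuity_pt_Rabs. intros e He. destruct (H s t Hs e He) as [d [Hd Hq]].
  exists d. split; [exact Hd|]. intros y Hy. apply Hq; [exact Hs| |exact Hy].
  rewrite Rminus_diag, Rabs_R0; exact Hd.
Qed.

Lemma tube_lemma (Q : R -> R -> Prop) s0 a b : a <= b ->
  (forall t, a <= t <= b -> exists d, 0 < d /\
     forall s' t', Rabs (s' - s0) < d -> Rabs (t' - t) < d -> Q s' t') ->
  exists e, 0 < e /\ forall s t, Rabs (s - s0) < e -> a <= t <= b -> Q s t.
Proof.
  intros Hab H.
  apply (interval_ind a b (fun x => exists e, 0 < e /\
           forall s t, Rabs (s - s0) < e -> a <= t <= x -> Q s t)); [exact Hab| |].
  - destruct (H a ltac:(lra)) as [d [Hd Hq]]. exists d. split; [exact Hd|].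
    intros s t Hs Ht. apply Hq; [exact Hs|]. replace (t - a) with 0 by lra. rewrite Rabs_R0; lra.
  - intros x Hx. destruct (H x Hx) as [d [Hd Hq]]. exists d. split; [exact Hd|].
    intros y z Hy Hyz Hz Hay Hzb [e [He Hl]].
    exists (Rmin e d). split; [apply Rmin_glb_lt; lra|].
    intros s t Hs Ht. assert (He' := Rmin_l e d). assert (Hd' := Rmin_r e d).
    destruct (Rle_dec t y); [apply Hl; lra|apply Hq; [lra|apply Rabs_def1; lra]].
Qed.

Section WindingHomotopyInvariance.

Variables (Fx Fy : R -> R -> R) (P : R).
Hypothesis HP : 0 < P.
Hypothesis CFx : cont01 Fx.
Hypothesis CFy : cont01 Fy.
Hypothesis Hnz : forall s t, 0 <= s <= 1 -> 0 < Fx s t * Fx s t + Fy s t * Fy s t.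
Hypothesis Hper : forall s t, 0 <= s <= 1 -> Fx s (t + P) = Fx s t /\ Fy s (t + P) = Fy s t.

Definition loop_arg_lift s th :=
  continuity th /\ forall t, 0 <= t <= P -> is_arg (Fx s t) (Fy s t) (th t).

Lemma loop_arg_lift_exists s : 0 <= s <= 1 -> exists th, loop_arg_lift s th.
Proof.
  intros Hs. apply (is_arg_lift_interval (Fx s) (Fy s) 0 P); [lra| | |].
  - apply cont01_slice; assumption.
  - apply cont01_slice; assumption.
  - intro t. apply Hnz, Hs.
Qed.

Lemma loop_inner_pos_near s0 : 0 <= s0 <= 1 -> exists e, 0 < e /\
  forall s t, 0 <= s <= 1 -> Rabs (s - s0) < e -> 0 <= t <= P ->
  0 < Fx s t * Fx s0 t + Fy s t * Fy s0 t.
Proof.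
  intros Hs0.
  destruct (tube_lemma (fun s t => 0 <= s <= 1 -> 0 < Fx s t * Fx s0 t + Fy s t * Fy s0 t)
              s0 0 P ltac:(lra)) as [e [He Hu]].
  - intros t Ht. destruct (inner_pos_near _ _ (Hnz s0 t Hs0)) as [e [He Hnear]].
    destruct (CFx s0 t Hs0 e He) as [d1 [Hd1 D1]].
    destruct (CFy s0 t Hs0 e He) as [d2 [Hd2 D2]].
    assert (Hm1 := Rmin_l d1 d2). assert (Hm2 := Rmin_r d1 d2).
    exists (Rmin d1 d2). split; [apply Rmin_glb_lt; lra|].
    intros s t' Hs Ht' Hs01.
    replace (Fx s t') with (Fx s0 t + (Fx s t' - Fx s0 t)) by ring.
    replace (Fy s t') with (Fy s0 t + (Fy s t' - Fy s0 t)) by ring.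
    replace (Fx s0 t') with (Fx s0 t + (Fx s0 t' - Fx s0 t)) by ring.
    replace (Fy s0 t') with (Fy s0 t + (Fy s0 t' - Fy s0 t)) by ring.
    assert (Z : Rabs (s0 - s0) < Rmin d1 d2)
      by (rewrite Rminus_diag, Rabs_R0; apply Rmin_glb_lt; lra).
    apply Hnear; [apply D1|apply D2|apply D1|apply D2]; auto; lra.
  - exists e. split; [exact He|]. intros s t Hs Hss0 Ht. apply Hu; assumption.
Qed.

(** Nearby loops have everywhere positive inner product, so a lift along one is corrected
    by a periodic [arg_correction] into a lift along the other. *)
Lemma loop_arg_increment_locally_constant s0 : 0 <= s0 <= 1 -> exists e, 0 < e /\
  forall s, 0 <= s <= 1 -> Rabs (s - s0) < e ->
  forall ths th0, loop_arg_lift s ths -> loop_arg_lift s0 th0 ->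
  ths P - ths 0 = th0 P - th0 0.
Proof.
  intros Hs0. destruct (loop_inner_pos_near s0 Hs0) as [e [He Hpos]].
  exists e. split; [exact He|]. intros s Hs Hss0 ths th0 [Cs Ls] [C0 L0].
  set (c := clamp 0 P).
  set (psi := fun t => arg_correction (Fx s0 (c t)) (Fy s0 (c t)) (Fx s (c t)) (Fy s (c t))).
  assert (Hc : forall t, 0 <= c t <= P) by (intro t; apply clamp_bounds; lra).
  assert (Cpsi : continuity psi).
  { intro t. apply continuity_pt_arg_correction; try (apply Hpos; auto).
    all: apply continuity_pt_comp'; [apply continuity_clamp|apply cont01_slice; auto]. }
  assert (Lpsi : forall t, 0 <= t <= P -> is_arg (Fx s t) (Fy s t) (th0 t + psi t)).
  { intros t Ht. unfold psi, c. rewrite clamp_id by exact Ht.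
    apply is_arg_correction; [apply L0, Ht|apply Hpos; auto]. }
  assert (E := is_arg_lift_unique (Fx s) (Fy s) 0 P ths (fun t => th0 t + psi t) ltac:(lra) Cs
     ltac:(intro x; apply continuity_pt_plus'; auto) Ls Lpsi P 0 ltac:(lra) ltac:(lra)).
  assert (Hpsi : psi P = psi 0).
  { unfold psi, c. rewrite (clamp_id 0 P P), (clamp_id 0 P 0) by lra.
    destruct (Hper s 0 Hs) as [E1 E2]. destruct (Hper s0 0 Hs0) as [E3 E4].
    rewrite Rplus_0_l in E1, E2, E3, E4. rewrite E1, E2, E3, E4. reflexivity. }
  lra.
Qed.

Theorem loop_arg_increment_homotopy_invariant th0 th1 :
  loop_arg_lift 0 th0 -> loop_arg_lift 1 th1 -> th1 P - th1 0 = th0 P - th0 0.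
Proof.
  intros L0 L1.
  assert (H : forall x, 0 <= x <= 1 -> forall th, loop_arg_lift x th -> th P - th 0 = th0 P - th0 0).
  { intros x Hx.
    apply (interval_ind 0 x (fun x => forall th, loop_arg_lift x th -> th P - th 0 = th0 P - th0 0));
      [lra| |].
    - intros th [C Lth]. destruct L0 as [C0 L0'].
      assert (E := is_arg_lift_unique (Fx 0) (Fy 0) 0 P th th0 ltac:(lra) C C0 Lth L0'
                     P 0 ltac:(lra) ltac:(lra)). lra.
    - intros x' Hx'. destruct (loop_arg_increment_locally_constant x' ltac:(lra)) as [e [He Hl]].
      exists e. split; [exact He|].
      intros y z Hy Hyz Hz Hay Hzb Py th Lth.
      destruct (loop_arg_lift_exists x' ltac:(lra)) as [thx Lx].
      destruct (loop_arg_lift_exists y ltac:(lra)) as [thy Ly].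
      rewrite (Hl z ltac:(lra) ltac:(apply Rabs_def1; lra) th thx Lth Lx).
      rewrite <- (Hl y ltac:(lra) ltac:(apply Rabs_def1; lra) thy thx Ly Lx).
      apply Py, Ly. }
  apply (H 1); [lra|exact L1].
Qed.

End WindingHomotopyInvariance.

(** * Curves on the sphere and the gap *)

Lemma V3_expand (v : V3) : v = (v3x v, v3y v, v3z v).
Proof. destruct v as [[a b] c]. reflexivity. Qed.

Lemma sum_sq_le_0 a b : a * a + b * b <= 0 -> a = 0 /\ b = 0.
Proof. intros H. apply Rplus_sqr_eq_0. unfold Rsqr. nra. Qed.

Lemma sqrt_eq_1 y : 0 <= y -> sqrt y = 1 -> y = 1.
Proof. intros Hy H. rewrite <- (sqrt_sqrt y Hy), H. ring. Qed.

Lemma dot3_self_ge_0 v : 0 <= dot3 v v.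
Proof. unfold dot3. nra. Qed.

Lemma dot3_self_pos v : v <> (0, 0, 0) -> 0 < dot3 v v.
Proof.
  destruct v as [[a b] c]. unfold dot3, v3x, v3y, v3z; cbn [fst snd]. intros H.
  destruct (Rlt_le_dec 0 (a * a + b * b + c * c)) as [Hp|Hp]; [exact Hp|].
  exfalso. apply H. assert (a = 0) by nra. assert (b = 0) by nra. assert (c = 0) by nra.
  subst. reflexivity.
Qed.

Lemma on_S2_dot3 x : on_S2 x -> dot3 x x = 1.
Proof. intros H. apply sqrt_eq_1; [apply dot3_self_ge_0|exact H]. Qed.

Lemma Derive_periodic f P t : (forall u, f (u + P) = f u) -> Derive f (t + P) = Derive f t.
Proof.
  intros H. unfold Derive. f_equal. apply Lim_ext. intro h.
  replace (t + P + h) with ((t + h) + P) by ring. rewrite !H. reflexivity.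
Qed.

Lemma unit_tangent_periodic c P t : (forall u, c (u + P) = c u) ->
  unit_tangent c (t + P) = unit_tangent c t.
Proof.
  intros H. unfold unit_tangent, dcurve.
  rewrite (Derive_periodic (fun s => v3x (c s))), (Derive_periodic (fun s => v3y (c s))),
    (Derive_periodic (fun s => v3z (c s))); try reflexivity; intro u; rewrite H; reflexivity.
Qed.

Lemma smooth_fun_continuity f : smooth_fun f -> continuity f.
Proof. intros H t. apply ex_derive_continuity_pt, (H 0%nat t). Qed.

Lemma closed_immersed_S2_dot3_dcurve c t : closed_immersed_S2 c -> dot3 (c t) (dcurve c t) = 0.
Proof.
  intros [HS [_ [S1 [S2 [S3 _]]]]].
  set (f1 := fun s => v3x (c s)). set (f2 := fun s => v3y (c s)). set (f3 := fun s => v3z (c s)).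
  assert (E : Derive (fun u => f1 u * f1 u + f2 u * f2 u + f3 u * f3 u) t =
     2 * (f1 t * Derive f1 t + f2 t * Derive f2 t + f3 t * Derive f3 t)).
  { apply is_derive_unique. auto_derive.
    - repeat split; first [apply (S1 0%nat)|apply (S2 0%nat)|apply (S3 0%nat)].
    - change (fun x => f1 x) with f1. change (fun x => f2 x) with f2.
      change (fun x => f3 x) with f3. simpl. ring. }
  assert (E2 : Derive (fun u => f1 u * f1 u + f2 u * f2 u + f3 u * f3 u) t = 0).
  { replace (fun u => f1 u * f1 u + f2 u * f2 u + f3 u * f3 u) with (fun _ : R => 1);
      [apply Derive_const|].
    apply functional_extensionality. intro u. symmetry. apply (on_S2_dot3 (c u)), HS. }
  change (f1 t * Derive f1 t + f2 t * Derive f2 t + f3 t * Derive f3 t = 0). lra.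
Qed.

Lemma unit_tangent_dot3 c t : dcurve c t <> (0, 0, 0) ->
  dot3 (unit_tangent c t) (unit_tangent c t) = 1.
Proof.
  intros H. assert (Hp := dot3_self_pos _ H). unfold unit_tangent, norm3.
  set (d := dcurve c t) in *. set (N := sqrt (dot3 d d)).
  assert (Hs : 0 < N) by (apply sqrt_lt_R0; exact Hp).
  assert (Hss : N * N = dot3 d d) by (apply sqrt_sqrt; lra).
  transitivity (/ N * / N * dot3 d d); [unfold scal3, dot3, v3x, v3y, v3z; cbn [fst snd]; ring|].
  rewrite <- Hss. field. lra.
Qed.

Lemma closed_immersed_S2_dot3_unit_tangent c t : closed_immersed_S2 c ->
  dot3 (c t) (unit_tangent c t) = 0.
Proof.
  intros Hc. unfold unit_tangent.
  transitivity (/ norm3 (dcurve c t) * dot3 (c t) (dcurve c t));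
    [unfold scal3, dot3, v3x, v3y, v3z; cbn [fst snd]; ring|].
  rewrite closed_immersed_S2_dot3_dcurve by exact Hc. ring.
Qed.

Lemma dcurve_gamma t : dcurve gamma t = (- sin t, cos t, 0).
Proof.
  unfold dcurve, gamma, v3x, v3y, v3z; cbn [fst snd]. f_equal; [f_equal|].
  - apply is_derive_unique. auto_derive; [exact I|ring].
  - apply is_derive_unique. auto_derive; [exact I|ring].
  - apply Derive_const.
Qed.

Lemma unit_tangent_gamma t : unit_tangent gamma t = (- sin t, cos t, 0).
Proof.
  unfold unit_tangent. rewrite dcurve_gamma. unfold norm3, dot3, scal3, v3x, v3y, v3z; cbn [fst snd].
  replace (- sin t * - sin t + cos t * cos t + 0 * 0) with 1
    by (rewrite <- (sin_sq_add_cos_sq t); ring).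
  rewrite sqrt_1, Rinv_1. f_equal; [f_equal|]; ring.
Qed.

(** The horizontal component of [x + i u], read in C. *)
Definition gap_x (x u : V3) := v3x x - v3y u.
Definition gap_y (x u : V3) := v3y x + v3x u.

Lemma gap_nonzero x u : dot3 x x = 1 -> dot3 u u = 1 -> dot3 x u = 0 -> ~ in_lift_gamma x u ->
  0 < gap_x x u * gap_x x u + gap_y x u * gap_y x u.
Proof.
  intros Hx Hu Hxu Hn.
  destruct (Rlt_le_dec 0 (gap_x x u * gap_x x u + gap_y x u * gap_y x u)) as [H|H]; [exact H|].
  exfalso. apply Hn. destruct x as [[x1 x2] x3]. destruct u as [[u1 u2] u3].
  unfold gap_x, gap_y, dot3, v3x, v3y, v3z in *; cbn [fst snd] in *.
  destruct (sum_sq_le_0 _ _ H) as [E1 E2].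
  assert (x1 = u2) by lra. assert (x2 = - u1) by lra. subst x1 x2.
  assert (x3 = 0 /\ u3 = 0) as [-> ->] by (apply sum_sq_le_0; nra).
  destruct (is_arg_exists u2 (- u1) ltac:(nra)) as [a [r [Hr [H1 H2]]]].
  assert (r = 1) as -> by (assert (E := polar_norm_sq _ _ _ _ H1 H2); nra).
  exists a. unfold tangent_lift. rewrite unit_tangent_gamma. unfold gamma.
  replace u2 with (cos a) by lra. replace u1 with (- sin a) by lra.
  f_equal; f_equal; try f_equal; ring.
Qed.

Lemma unit_normal_field_gamma_vertical eta : unit_normal_field_gamma eta ->
  exists sg, sg * sg = 1 /\ forall t, eta t = (0, 0, sg).
Proof.
  intros [H1 [H2 [H3 [_ [_ [_ S3]]]]]].
  assert (Hpt : forall t, v3x (eta t) = 0 /\ v3y (eta t) = 0 /\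
                          (v3z (eta t) = 1 \/ v3z (eta t) = -1)).
  { intro t. specialize (H1 t). specialize (H2 t). specialize (H3 t).
    rewrite dcurve_gamma in H2. unfold gamma in H1.
    apply sqrt_eq_1 in H3; [|apply dot3_self_ge_0].
    destruct (eta t) as [[e1 e2] e3]. unfold dot3, v3x, v3y, v3z in *. cbn [fst snd] in *.
    assert (Hs := sin_sq_add_cos_sq t).
    assert (E1 : e1 = 0) by nra. assert (E2 : e2 = 0) by nra. subst e1 e2.
    assert (Z : (e3 - 1) * (e3 + 1) = 0) by lra.
    split; [reflexivity|split; [reflexivity|]].
    destruct (Rmult_integral _ _ Z); [left|right]; lra. }
  exists (v3z (eta 0)). split; [destruct (Hpt 0) as [_ [_ [-> | ->]]]; ring|].
  assert (Hc := continuous_sign_const (fun t => v3z (eta t)) (smooth_fun_continuity _ S3)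
                  (fun t => proj2 (proj2 (Hpt t)))).
  intro t. rewrite (V3_expand (eta t)). destruct (Hpt t) as [-> [-> _]]. rewrite (Hc t). reflexivity.
Qed.

(** * The model satellite *)

Section ModelCurve.

Variables (sg P Q e : R).

Definition lat t := e * sin (Q * t).
Definition dlat t := e * Q * cos (Q * t).
Definition model_curve t : V3 :=
  (cos (lat t) * cos (P * t), cos (lat t) * sin (P * t), sg * sin (lat t)).
Definition model_speed t := sqrt (dlat t * dlat t + P * P * (cos (lat t) * cos (lat t))).

(** [gap] of the model curve, rotated back by the angle [- P t]. *)
Definition model_gap_x t := cos (lat t) - P * cos (lat t) / model_speed t.
Definition model_gap_y t := - (dlat t * sin (lat t)) / model_speed t.

Lemma sat_model_model_curve eta p q t : sg * sg = 1 -> (forall u, eta u = (0, 0, sg)) ->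
  P = INR p -> Q = INR q -> sat_model eta p q e t = model_curve t.
Proof.
  intros Hsg Heta HP HQ. unfold sat_model, model_curve, lat. rewrite Heta, <- HP, <- HQ.
  set (m := e * sin (Q * t)).
  unfold expS2, scal3, norm3, dot3, gamma, add3, v3x, v3y, v3z; cbn [fst snd].
  replace (m * 0 * (m * 0) + m * 0 * (m * 0) + m * sg * (m * sg)) with (m²)
    by (unfold Rsqr; transitivity (m * m * (sg * sg)); [rewrite Hsg|]; ring).
  rewrite sqrt_Rsqr_abs.
  destruct (Req_EM_T (Rabs m) 0) as [H0|H0].
  - assert (m = 0) as -> by (revert H0; unfold Rabs; destruct (Rcase_abs m); lra).
    rewrite cos_0, sin_0. f_equal; [f_equal|]; ring.
  - assert (Hm : m <> 0) by (intro Hz; apply H0; rewrite Hz, Rabs_R0; reflexivity).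
    assert (Hc : cos (Rabs m) = cos m)
      by (unfold Rabs; destruct (Rcase_abs m); [rewrite cos_neg|]; reflexivity).
    assert (Hs : sin (Rabs m) / Rabs m * (m * sg) = sg * sin m)
      by (unfold Rabs; destruct (Rcase_abs m); [rewrite sin_neg|]; field; lra).
    rewrite Hc, <- Hs. f_equal; [f_equal|]; ring.
Qed.

Lemma dcurve_model_curve t : dcurve model_curve t =
  (- sin (lat t) * dlat t * cos (P * t) - P * cos (lat t) * sin (P * t),
   - sin (lat t) * dlat t * sin (P * t) + P * cos (lat t) * cos (P * t),
   sg * cos (lat t) * dlat t).
Proof.
  unfold dcurve, model_curve, lat, dlat, v3x, v3y, v3z; cbn [fst snd].
  f_equal; [f_equal|]; apply is_derive_unique; auto_derive; auto; ring.
Qed.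

Lemma norm3_dcurve_model_curve t : sg * sg = 1 -> norm3 (dcurve model_curve t) = model_speed t.
Proof.
  intros Hsg. rewrite dcurve_model_curve. unfold norm3, model_speed, dot3, v3x, v3y, v3z.
  cbn [fst snd]. f_equal.
  assert (H1 := sin_sq_add_cos_sq (P * t)). assert (H2 := sin_sq_add_cos_sq (lat t)).
  transitivity (dlat t * dlat t * (sin (lat t) * sin (lat t))
    * (sin (P * t) * sin (P * t) + cos (P * t) * cos (P * t))
    + (sg * sg) * (cos (lat t) * cos (lat t)) * (dlat t * dlat t)
    + P * P * (cos (lat t) * cos (lat t)) * (sin (P * t) * sin (P * t) + cos (P * t) * cos (P * t)));
    [ring|].
  rewrite Hsg, H1.
  transitivity (dlat t * dlat t * (sin (lat t) * sin (lat t) + cos (lat t) * cos (lat t))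
    + P * P * (cos (lat t) * cos (lat t))); [ring|].
  rewrite H2. ring.
Qed.

Lemma gap_model_curve t : sg * sg = 1 -> 0 < model_speed t ->
  gap_x (model_curve t) (unit_tangent model_curve t)
    = cos (P * t) * model_gap_x t - sin (P * t) * model_gap_y t /\
  gap_y (model_curve t) (unit_tangent model_curve t)
    = sin (P * t) * model_gap_x t + cos (P * t) * model_gap_y t.
Proof.
  intros Hsg HN. unfold unit_tangent. rewrite norm3_dcurve_model_curve, dcurve_model_curve by exact Hsg.
  unfold gap_x, gap_y, scal3, model_curve, model_gap_x, model_gap_y, v3x, v3y, v3z.
  cbn [fst snd]. split; field; lra.
Qed.

End ModelCurve.

Lemma sin_mul_self_pos m : Rabs m <= 1 -> m <> 0 -> 0 < sin m * m.
Proof.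
  intros Hm Hn. assert (HPI := PI2_1). apply Rabs_le_between in Hm.
  destruct (Rlt_le_dec 0 m).
  - assert (0 < sin m) by (apply sin_gt_0; lra). nra.
  - assert (0 < sin (- m)) by (apply sin_gt_0; lra). rewrite sin_neg in *. nra.
Qed.

Section ModelWinding.

Variables (P Q e : R) (q : nat).
Hypothesis HP : 0 < P.
Hypothesis HQ : Q = INR q.
Hypothesis He : 0 < e <= 1.

Local Notation m := (lat Q e).
Local Notation m' := (dlat Q e).
Local Notation speed := (model_speed P Q e).
Local Notation gx := (model_gap_x P Q e).
Local Notation gy := (model_gap_y P Q e).
Hypothesis Hgap : forall t, 0 < gx t * gx t + gy t * gy t.

Lemma cos_lat_pos t : 0 < cos (m t).
Proof.
  assert (H := SIN_bound (Q * t)). assert (HPI := PI2_1).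
  apply cos_gt_0; unfold lat; nra.
Qed.

Lemma model_speed_sq_pos t : 0 < m' t * m' t + P * P * (cos (m t) * cos (m t)).
Proof.
  assert (H := cos_lat_pos t). assert (0 <= m' t * m' t) by apply Rle_0_sqr.
  assert (0 < P * P * (cos (m t) * cos (m t))) by (repeat apply Rmult_lt_0_compat; lra).
  lra.
Qed.

Lemma model_speed_pos t : 0 < speed t.
Proof. apply sqrt_lt_R0, model_speed_sq_pos. Qed.

Lemma model_speed_sq t : speed t * speed t = m' t * m' t + P * P * (cos (m t) * cos (m t)).
Proof. apply sqrt_sqrt, Rlt_le, model_speed_sq_pos. Qed.

(** Where the model curve crosses the equator it does so transversally, or else its tangent
    lift would meet that of [gamma]. *)
Lemma dlat_neq_0 t : m t = 0 -> m' t <> 0.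
Proof.
  intros Hm Hp. assert (H := Hgap t). assert (HN := model_speed_sq t).
  assert (HNp := model_speed_pos t).
  unfold model_gap_x, model_gap_y in H.
  rewrite Hm, Hp, cos_0, sin_0 in *.
  assert (speed t = P) as Hs by nra. rewrite Hs in H.
  replace (1 - P * 1 / P) with 0 in H by (field; lra).
  replace (- (0 * 0) / P) with 0 in H by (field; lra). lra.
Qed.

Lemma Q_pos : 0 < Q.
Proof.
  destruct (pos_INR q) as [H|H]; [rewrite HQ; exact H|]. exfalso. apply (dlat_neq_0 0).
  - unfold lat. rewrite Rmult_0_r, sin_0. ring.
  - unfold dlat. rewrite HQ, <- H. ring.
Qed.

(** The winding of the gap is computed along the chain of loops
    [w3 ~> w2 ~> w1 ~> - w1 ^ 2 ~> gap]; consecutive loops have positive inner product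
    everywhere, so each angle lift is the previous one plus a periodic [arg_correction]. *)
Definition w3x t := e * sin (Q * t).
Definition w3y t := e * cos (Q * t).
Definition w2x t := m t.
Definition w2y t := m' t / P.
Definition w1x t := sin (m t).
Definition w1y t := m' t / P.
Definition w0x t := - (w1x t * w1x t - w1y t * w1y t).
Definition w0y t := - (w1x t * w1y t + w1y t * w1x t).

Definition arg_w3 t := PI / 2 - Q * t.
Definition arg_w2 t := arg_w3 t + arg_correction (w3x t) (w3y t) (w2x t) (w2y t).
Definition arg_w1 t := arg_w2 t + arg_correction (w2x t) (w2y t) (w1x t) (w1y t).
Definition arg_w0 t := arg_w1 t + arg_w1 t + PI.
Definition arg_gap t := arg_w0 t + arg_correction (w0x t) (w0y t) (gx t) (gy t).

Lemma inner_w2_w3_pos t : 0 < w2x t * w3x t + w2y t * w3y t.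
Proof.
  unfold w2x, w2y, w3x, w3y, lat, dlat.
  assert (HQp := Q_pos). assert (Hs := sin_sq_add_cos_sq (Q * t)).
  set (s := sin (Q * t)) in *. set (c := cos (Q * t)) in *.
  replace (e * s * (e * s) + e * Q * c / P * (e * c)) with (e * e * (s * s + (Q / P) * (c * c)))
    by (field; lra).
  assert (0 < Q / P) by (apply Rdiv_lt_0_compat; lra).
  apply Rmult_lt_0_compat; [nra|].
  destruct (Req_dec s 0) as [H0|H0]; [rewrite H0 in *; nra|].
  assert (0 < s * s) by (apply Rsqr_pos_lt in H0; exact H0). nra.
Qed.

Lemma inner_w1_w2_pos t : 0 < w1x t * w2x t + w1y t * w2y t.
Proof.
  unfold w1x, w1y, w2x, w2y. destruct (Req_dec (m t) 0) as [H0|H0].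
  - assert (Hk := dlat_neq_0 t H0). rewrite H0, sin_0.
    assert (m' t / P <> 0) by (unfold Rdiv; apply Rmult_integral_contrapositive; split; [exact Hk|apply Rinv_neq_0_compat; lra]).
    assert (0 < m' t / P * (m' t / P)) by (apply Rsqr_pos_lt; assumption). lra.
  - assert (Hb : Rabs (m t) <= 1).
    { apply Rabs_le. assert (H := SIN_bound (Q * t)). unfold lat. nra. }
    assert (H := sin_mul_self_pos _ Hb H0).
    assert (0 <= m' t / P * (m' t / P)) by apply Rle_0_sqr. lra.
Qed.

Lemma inner_gap_w0_pos t : 0 < gx t * w0x t + gy t * w0y t.
Proof.
  assert (HN := model_speed_sq t). assert (HNp := model_speed_pos t).
  assert (Hc := cos_lat_pos t). assert (Hsc := sin_sq_add_cos_sq (m t)).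
  assert (Hb := Hgap t). unfold model_gap_x, model_gap_y in *. unfold w0x, w0y, w1x, w1y.
  set (N := speed t) in *. set (x := m t) in *. set (y := m' t) in *.
  set (cx := cos x) in *. set (sx := sin x) in *.
  assert (K : y * y - P * P * (sx * sx) = (N - P) * (N + P))
    by (replace (sx * sx) with (1 - cx * cx) by lra; nra).
  assert (E : (cx - P * cx / N) * - (sx * sx - y / P * (y / P))
              + - (y * sx) / N * - (sx * (y / P) + y / P * sx)
            = (cx * (N - P) * (y * y - P * P * (sx * sx)) + 2 * P * (y * sx) * (y * sx))
              / (N * P * P)) by (field; split; apply Rgt_not_eq; assumption).
  rewrite K in E.
  replace (cx * (N - P) * ((N - P) * (N + P))) with (cx * (N - P) * (N - P) * (N + P)) in E
    by ring.
  rewrite E. apply Rdiv_lt_0_compat; [|assert (0 < N * P) by nra; nra].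
  assert (A1 : 0 <= cx * (N - P) * (N - P) * (N + P))
    by (assert (0 <= (N - P) * (N - P)) by apply Rle_0_sqr; assert (0 < cx * (N + P)) by nra; nra).
  assert (A2 : 0 <= 2 * P * (y * sx) * (y * sx))
    by (assert (0 <= (y * sx) * (y * sx)) by apply Rle_0_sqr; nra).
  destruct (Rlt_le_dec 0 (cx * (N - P) * (N - P) * (N + P) + 2 * P * (y * sx) * (y * sx)))
    as [H|H]; [exact H|exfalso].
  assert (Z1 : (N - P) * (N - P) = 0).
  { assert (Z : (N - P) * (N - P) * (cx * (N + P)) = 0) by lra.
    destruct (Rmult_integral _ _ Z); [assumption|nra]. }
  assert (N = P) as EN by (destruct (Rmult_integral _ _ Z1); lra).
  assert (y * sx = 0) as Eys by (assert (Z2 : (y * sx) * (y * sx) = 0) by nra;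
                                 destruct (Rmult_integral _ _ Z2); lra).
  rewrite EN, Eys in Hb. replace (cx - P * cx / P) with 0 in Hb by (field; lra).
  replace (- 0 / P) with 0 in Hb by (field; lra). lra.
Qed.

Lemma is_arg_w3 t : is_arg (w3x t) (w3y t) (arg_w3 t).
Proof. exists e. unfold arg_w3, w3x, w3y. rewrite cos_shift, sin_shift. repeat split; lra. Qed.

Lemma is_arg_w2 t : is_arg (w2x t) (w2y t) (arg_w2 t).
Proof. apply is_arg_correction; [apply is_arg_w3|apply inner_w2_w3_pos]. Qed.

Lemma is_arg_w1 t : is_arg (w1x t) (w1y t) (arg_w1 t).
Proof. apply is_arg_correction; [apply is_arg_w2|apply inner_w1_w2_pos]. Qed.

Lemma is_arg_w0 t : is_arg (w0x t) (w0y t) (arg_w0 t).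
Proof.
  assert (H := is_arg_rotate _ _ _ PI (is_arg_mul _ _ _ _ _ _ (is_arg_w1 t) (is_arg_w1 t))).
  rewrite cos_PI, sin_PI in H. eapply is_arg_ext; [exact H|unfold w0x; ring|unfold w0y; ring].
Qed.

Lemma is_arg_gap t : is_arg (gx t) (gy t) (arg_gap t).
Proof. apply is_arg_correction; [apply is_arg_w0|apply inner_gap_w0_pos]. Qed.

Lemma continuity_arg_gap : continuity arg_gap.
Proof.
  assert (CN : continuity speed)
    by (intro t; apply continuity_pt_sqrt'; [continuity_pt_auto|apply model_speed_sq_pos]).
  assert (CNnz : forall t, speed t <> 0) by (intro t; apply Rgt_not_eq, model_speed_pos).
  assert (Cw2y : continuity w2y)
    by (intro t; apply continuity_pt_div'; [continuity_pt_auto|apply continuity_pt_const'|lra]).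
  assert (Cw1x : continuity w1x) by (intro t; continuity_pt_auto).
  assert (C2 : continuity arg_w2).
  { intro t. apply continuity_pt_plus'; [unfold arg_w3; continuity_pt_auto|].
    apply continuity_pt_arg_correction; [| | |apply Cw2y|apply inner_w2_w3_pos];
      continuity_pt_auto. }
  assert (C1 : continuity arg_w1).
  { intro t. apply continuity_pt_plus'; [apply C2|].
    apply continuity_pt_arg_correction; [continuity_pt_auto|apply Cw2y|apply Cw1x|apply Cw2y|];
      apply inner_w1_w2_pos. }
  intro t. unfold arg_gap, arg_w0.
  apply continuity_pt_plus';
    [apply continuity_pt_plus'; [apply continuity_pt_plus'; apply C1|apply continuity_pt_const']|].
  apply continuity_pt_arg_correction; [| | | |apply inner_gap_w0_pos].
  - apply continuity_pt_opp', continuity_pt_minus'; apply continuity_pt_mult';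
      first [apply Cw1x|apply Cw2y].
  - apply continuity_pt_opp', continuity_pt_plus'; apply continuity_pt_mult';
      first [apply Cw1x|apply Cw2y].
  - apply continuity_pt_minus'; [continuity_pt_auto|].
    apply continuity_pt_div'; [continuity_pt_auto|apply CN|apply CNnz].
  - apply continuity_pt_div'; [continuity_pt_auto|apply CN|apply CNnz].
Qed.

Lemma arg_gap_increment : arg_gap (2 * PI) - arg_gap 0 = - (4 * PI * Q).
Proof.
  assert (Hs : sin (Q * (2 * PI)) = sin (Q * 0))
    by (rewrite HQ, Rmult_0_r, <- (sin_period 0 q); f_equal; ring).
  assert (Hc : cos (Q * (2 * PI)) = cos (Q * 0))
    by (rewrite HQ, Rmult_0_r, <- (cos_period 0 q); f_equal; ring).
  unfold arg_gap, arg_w0, arg_w1, arg_w2, arg_w3, w0x, w0y, w1x, w1y, w2x, w2y, w3x, w3y,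
    model_gap_x, model_gap_y, model_speed, lat, dlat.
  rewrite Hs, Hc. ring.
Qed.

End ModelWinding.

(** * The covering map and the straight-line homotopy *)

Definition opp4 (w : V4) : V4 := let '((a, b), (c, d)) := w in ((-a, -b), (-c, -d)).

Lemma opp4_involutive w : opp4 (opp4 w) = w.
Proof. destruct w as [[a b] [c d]]. simpl. f_equal; f_equal; ring. Qed.

Lemma complex_sq_eq a b a' b' : a * a - b * b = a' * a' - b' * b' -> a * b = a' * b' ->
  (a' = a /\ b' = b) \/ (a' = -a /\ b' = -b).
Proof.
  intros H1 H2.
  assert (E : ((a' - a) * (a' - a) + (b' - b) * (b' - b)) * ((a' + a) * (a' + a) + (b' + b) * (b' + b))
              = 0) by nra.
  destruct (Rmult_integral _ _ E) as [Z|Z]; [left|right];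
    destruct (sum_sq_le_0 _ _ (Req_le _ _ Z)); lra.
Qed.

(** [lmap] determines [z1^2], [z2^2] and [z1 conj z2], hence [(z1, z2)] up to a common sign. *)
Lemma lmap_fibre w w' : lmap w = lmap w' -> w' = w \/ w' = opp4 w.
Proof.
  destruct w as [[a b] [c d]]. destruct w' as [[a' b'] [c' d']]. unfold lmap, opp4.
  intros H. injection H. intros E6 E5 E4 E3 E2 E1.
  assert (G1 : a * c + b * d = a' * c' + b' * d') by lra.
  assert (G2 : b * c - a * d = b' * c' - a' * d') by lra.
  destruct (complex_sq_eq a b a' b' ltac:(lra) ltac:(lra)) as [[-> ->]|[-> ->]];
  destruct (complex_sq_eq c d c' d' ltac:(lra) ltac:(lra)) as [[-> ->]|[-> ->]];
    try (left; reflexivity); try (right; reflexivity);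
  assert (Z : (a * a + b * b) * (c * c + d * d) = 0) by nra;
  destruct (Rmult_integral _ _ Z) as [Z'|Z'];
  destruct (sum_sq_le_0 _ _ (Req_le _ _ Z')); subst;
  [right|left|left|right]; f_equal; f_equal; ring.
Qed.

Definition z1x (sigma : R -> V4) t := fst (fst (sigma t)).
Definition z1y (sigma : R -> V4) t := snd (fst (sigma t)).
Definition z2x (sigma : R -> V4) t := fst (snd (sigma t)).
Definition z2y (sigma : R -> V4) t := snd (snd (sigma t)).

Lemma gap_lmap (sigma : R -> V4) (c : R -> V3) t : lmap (sigma t) = tangent_lift c t ->
  gap_x (c t) (unit_tangent c t) = 2 * (z2x sigma t * z2x sigma t - z2y sigma t * z2y sigma t) /\
  gap_y (c t) (unit_tangent c t) = 2 * (z2x sigma t * z2y sigma t + z2y sigma t * z2x sigma t).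
Proof.
  unfold tangent_lift, z2x, z2y. destruct (sigma t) as [[a b] [x y]]. unfold lmap. intros E.
  assert (E1 := f_equal fst E). assert (E2 := f_equal snd E). cbn [fst snd] in E1, E2.
  rewrite <- E1, <- E2. unfold gap_x, gap_y, v3x, v3y. simpl. split; ring.
Qed.

Lemma on_S3_sum (sigma : R -> V4) t : on_S3 (sigma t) ->
  z1x sigma t * z1x sigma t + z1y sigma t * z1y sigma t
  + z2x sigma t * z2x sigma t + z2y sigma t * z2y sigma t = 1.
Proof. unfold z1x, z1y, z2x, z2y. destruct (sigma t) as [[a b] [c d]]. exact (fun H => H). Qed.

Lemma lmap_shift_sign (sigma : R -> V4) T :
  continuity (z1x sigma) -> continuity (z1y sigma) ->
  continuity (z2x sigma) -> continuity (z2y sigma) -> (forall t, on_S3 (sigma t)) ->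
  (forall t, lmap (sigma (t + T)) = lmap (sigma t)) ->
  (forall t, sigma (t + T) = sigma t) \/ (forall t, sigma (t + T) = opp4 (sigma t)).
Proof.
  intros C1 C2 C3 C4 HS3 Hl.
  set (ev := fun t => z1x sigma (t + T) * z1x sigma t + z1y sigma (t + T) * z1y sigma t
                    + z2x sigma (t + T) * z2x sigma t + z2y sigma (t + T) * z2y sigma t).
  assert (Hev : forall t, (sigma (t + T) = sigma t -> ev t = 1) /\
                          (sigma (t + T) = opp4 (sigma t) -> ev t = -1)).
  { intro t. assert (K := on_S3_sum sigma t (HS3 t)). unfold ev, z1x, z1y, z2x, z2y in *.
    split; intros ->; [exact K|]. destruct (sigma t) as [[a b] [c d]]. simpl in *. lra. }
  assert (Cev : continuity ev).
  { intro x. unfold ev. repeat apply continuity_pt_plus';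
      apply continuity_pt_mult'; first [apply continuity_pt_shift; assumption|auto]. }
  assert (Hev1 : forall t, ev t = 1 \/ ev t = -1).
  { intro t. destruct (lmap_fibre _ _ (eq_sym (Hl t))) as [E|E]; [left|right]; apply (Hev t), E. }
  assert (Hc := continuous_sign_const ev Cev Hev1).
  destruct (Hev1 0) as [E0|E0]; [left|right]; intro t;
    destruct (lmap_fibre _ _ (eq_sym (Hl t))) as [E|E]; try exact E; exfalso.
  - assert (K := proj2 (Hev t) E). rewrite Hc in K. lra.
  - assert (K := proj1 (Hev t) E). rewrite Hc in K. lra.
Qed.

Lemma cos_sin_add_2PI_Z x (n : Z) : cos (x + 2 * PI * IZR n) = cos x /\ sin (x + 2 * PI * IZR n) = sin x.
Proof.
  assert (S : sin (2 * PI * IZR n) = 0)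
    by (apply sin_eq_0_1; exists (2 * n)%Z; rewrite mult_IZR; ring).
  assert (C : cos (2 * PI * IZR n) = 1)
    by (replace (2 * PI * IZR n) with (2 * (IZR n * PI)) by ring;
        rewrite cos_2a_sin, (sin_eq_0_1 _ (ex_intro _ n eq_refl)); ring).
  rewrite cos_plus, sin_plus, S, C. split; ring.
Qed.

Section StraightHomotopy.

Variables (sigma : R -> V4) (th : R -> R) (T W P c1 c2 : R) (n k : Z).
Hypothesis C1x : continuity (z1x sigma).
Hypothesis C1y : continuity (z1y sigma).
Hypothesis C2x : continuity (z2x sigma).
Hypothesis C2y : continuity (z2y sigma).
Hypothesis HS3 : forall t, on_S3 (sigma t).
Hypothesis Cth : continuity th.
Hypothesis Hth : forall t, is_arg (z2x sigma t) (z2y sigma t) (th t).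
Hypothesis Hsigma_per : forall t, sigma (t + T) = sigma t.
Hypothesis Hth_per : forall t, th (t + T) = th t + W * T / 2.
Hypothesis Hn : W * T / 2 = 2 * PI * IZR n.
Hypothesis Hk : P * T / 2 = 2 * PI * IZR k.
Hypothesis Hc1 : 0 < c1.
Hypothesis Hc2 : 0 < c2.
Hypothesis Hc12 : c1 * c1 + c2 * c2 = 1.

Definition z2_abs t := sqrt (z2x sigma t * z2x sigma t + z2y sigma t * z2y sigma t).

(** Interpolate [z1] linearly, and [z2] in polar coordinates along the angle lift [th];
    the second coordinate then never vanishes, and normalizing lands in [S^3]. *)
Definition hom_angle s t := th t - s * (th t - W * t / 2).
Definition hom_radius s t := (1 - s) * z2_abs t + s * c2.
Definition hom_x1 s t := (1 - s) * z1x sigma t + s * (c1 * cos (P * t / 2)).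
Definition hom_y1 s t := (1 - s) * z1y sigma t + s * (c1 * sin (P * t / 2)).
Definition hom_x2 s t := hom_radius s t * cos (hom_angle s t).
Definition hom_y2 s t := hom_radius s t * sin (hom_angle s t).
Definition hom_norm_sq s t :=
  hom_x1 s t * hom_x1 s t + hom_y1 s t * hom_y1 s t + hom_x2 s t * hom_x2 s t + hom_y2 s t * hom_y2 s t.
Definition hom_norm s t := sqrt (hom_norm_sq s t).
Definition straight_homotopy s t : V4 :=
  ((hom_x1 s t / hom_norm s t, hom_y1 s t / hom_norm s t),
   (hom_x2 s t / hom_norm s t, hom_y2 s t / hom_norm s t)).

Lemma z2_abs_pos t : 0 < z2_abs t.
Proof. apply sqrt_lt_R0, (is_arg_norm_pos _ _ _ (Hth t)). Qed.

Lemma z2_polar t : z2x sigma t = z2_abs t * cos (th t) /\ z2y sigma t = z2_abs t * sin (th t).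
Proof.
  destruct (Hth t) as [r [Hr [E1 E2]]].
  assert (r = z2_abs t) as <-; [|split; assumption].
  unfold z2_abs. rewrite (polar_norm_sq _ _ _ _ E1 E2). rewrite sqrt_square; lra.
Qed.

Lemma hom_radius_pos s t : 0 <= s <= 1 -> 0 < hom_radius s t.
Proof.
  intros Hs. unfold hom_radius. assert (H := z2_abs_pos t).
  destruct (Req_dec s 0) as [->|]; nra.
Qed.

Lemma hom_x2_y2_sq s t : hom_x2 s t * hom_x2 s t + hom_y2 s t * hom_y2 s t = hom_radius s t * hom_radius s t.
Proof. unfold hom_x2, hom_y2. apply (polar_norm_sq _ _ (hom_angle s t)); reflexivity. Qed.

Lemma hom_norm_sq_pos s t : 0 <= s <= 1 -> 0 < hom_norm_sq s t.
Proof.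
  intros Hs. unfold hom_norm_sq. assert (H := hom_x2_y2_sq s t). assert (H2 := hom_radius_pos s t Hs).
  assert (0 <= hom_x1 s t * hom_x1 s t) by apply Rle_0_sqr.
  assert (0 <= hom_y1 s t * hom_y1 s t) by apply Rle_0_sqr. nra.
Qed.

Lemma hom_norm_pos s t : 0 <= s <= 1 -> 0 < hom_norm s t.
Proof. intros. apply sqrt_lt_R0, hom_norm_sq_pos; assumption. Qed.

Lemma straight_homotopy_S3 s t : 0 <= s <= 1 ->
  on_S3 (straight_homotopy s t) /\ snd (straight_homotopy s t) <> (0, 0).
Proof.
  intros Hs. assert (HN := hom_norm_pos s t Hs).
  assert (HN2 : hom_norm s t * hom_norm s t = hom_norm_sq s t)
    by (apply sqrt_sqrt, Rlt_le, hom_norm_sq_pos, Hs).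
  split.
  - unfold on_S3, straight_homotopy.
    transitivity (hom_norm_sq s t / (hom_norm s t * hom_norm s t)); [unfold hom_norm_sq; field; lra|].
    rewrite HN2. field. apply Rgt_not_eq, hom_norm_sq_pos, Hs.
  - unfold straight_homotopy. simpl. intro E. injection E. intros E4 E3.
    assert (hom_x2 s t = 0) as Z3 by (apply (Rmult_eq_reg_r (/ hom_norm s t));
      [unfold Rdiv in E3; rewrite E3; ring|apply Rinv_neq_0_compat; lra]).
    assert (hom_y2 s t = 0) as Z4 by (apply (Rmult_eq_reg_r (/ hom_norm s t));
      [unfold Rdiv in E4; rewrite E4; ring|apply Rinv_neq_0_compat; lra]).
    assert (K := hom_x2_y2_sq s t). assert (K2 := hom_radius_pos s t Hs).
    rewrite Z3, Z4 in K. nra.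
Qed.

Lemma straight_homotopy_0 t : straight_homotopy 0 t = sigma t.
Proof.
  assert (HS := on_S3_sum sigma t (HS3 t)). destruct (z2_polar t) as [E3 E4].
  assert (Ea : hom_angle 0 t = th t) by (unfold hom_angle; ring).
  assert (F1 : hom_x1 0 t = z1x sigma t) by (unfold hom_x1; ring).
  assert (F2 : hom_y1 0 t = z1y sigma t) by (unfold hom_y1; ring).
  assert (F3 : hom_x2 0 t = z2x sigma t) by (unfold hom_x2, hom_radius; rewrite Ea, E3; ring).
  assert (F4 : hom_y2 0 t = z2y sigma t) by (unfold hom_y2, hom_radius; rewrite Ea, E4; ring).
  assert (ES : hom_norm_sq 0 t = 1) by (unfold hom_norm_sq; rewrite F1, F2, F3, F4; exact HS).
  unfold straight_homotopy, hom_norm. rewrite ES, sqrt_1, F1, F2, F3, F4.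
  unfold z1x, z1y, z2x, z2y. destruct (sigma t) as [[a b] [c d]]. simpl. f_equal; f_equal; field.
Qed.

Lemma straight_homotopy_1 t : straight_homotopy 1 t =
  ((c1 * cos (P * t / 2), c1 * sin (P * t / 2)), (c2 * cos (W * t / 2), c2 * sin (W * t / 2))).
Proof.
  assert (E : hom_angle 1 t = W * t / 2) by (unfold hom_angle; ring).
  assert (ES : hom_norm_sq 1 t = 1).
  { unfold hom_norm_sq, hom_x1, hom_y1, hom_x2, hom_y2, hom_radius. rewrite E.
    transitivity (c1 * c1 + c2 * c2); [|exact Hc12].
    transitivity (c1 * c1 * (sin (P * t / 2) * sin (P * t / 2) + cos (P * t / 2) * cos (P * t / 2))
      + c2 * c2 * (sin (W * t / 2) * sin (W * t / 2) + cos (W * t / 2) * cos (W * t / 2)));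
      [ring|rewrite !sin_sq_add_cos_sq; ring]. }
  unfold straight_homotopy, hom_norm. rewrite ES, sqrt_1.
  unfold hom_x1, hom_y1, hom_x2, hom_y2, hom_radius. rewrite E. f_equal; f_equal; field.
Qed.

Lemma straight_homotopy_periodic s t : straight_homotopy s (t + T) = straight_homotopy s t.
Proof.
  assert (EP : P * (t + T) / 2 = P * t / 2 + 2 * PI * IZR k) by (rewrite <- Hk; field).
  assert (Ea : hom_angle s (t + T) = hom_angle s t + 2 * PI * IZR n)
    by (unfold hom_angle; rewrite Hth_per, <- Hn; field).
  unfold straight_homotopy, hom_norm, hom_norm_sq, hom_x1, hom_y1, hom_x2, hom_y2, hom_radius.
  rewrite Ea, EP, !(proj1 (cos_sin_add_2PI_Z _ _)), !(proj2 (cos_sin_add_2PI_Z _ _)).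
  unfold z2_abs, z1x, z1y, z2x, z2y. rewrite Hsigma_per. reflexivity.
Qed.

Lemma cont01_straight_homotopy_components :
  cont01 hom_x1 /\ cont01 hom_y1 /\ cont01 hom_x2 /\ cont01 hom_y2 /\ cont01 hom_norm.
Proof.
  assert (Cx1 : cont01 hom_x1).
  { unfold hom_x1. apply cont01_plus; apply cont01_mult;
      [apply cont01_minus; [apply cont01_const|apply cont01_s]|apply cont01_t, C1x|
       apply cont01_s|apply cont01_t; intro t; continuity_pt_auto]. }
  assert (Cy1 : cont01 hom_y1).
  { unfold hom_y1. apply cont01_plus; apply cont01_mult;
      [apply cont01_minus; [apply cont01_const|apply cont01_s]|apply cont01_t, C1y|
       apply cont01_s|apply cont01_t; intro t; continuity_pt_auto]. }
  assert (Cr : cont01 hom_radius).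
  { unfold hom_radius. apply cont01_plus; apply cont01_mult;
      [apply cont01_minus; [apply cont01_const|apply cont01_s]| |apply cont01_s|apply cont01_const].
    apply cont01_t. intro t. unfold z2_abs. apply continuity_pt_sqrt';
      [continuity_pt_auto; auto|apply (is_arg_norm_pos _ _ _ (Hth t))]. }
  assert (Ca : cont01 hom_angle).
  { unfold hom_angle. apply cont01_minus; [apply cont01_t, Cth|].
    apply cont01_mult; [apply cont01_s|apply cont01_t]. intro t.
    apply continuity_pt_minus'; [apply Cth|continuity_pt_auto]. }
  assert (Cx2 : cont01 hom_x2) by (apply cont01_mult; [exact Cr|apply cont01_cos, Ca]).
  assert (Cy2 : cont01 hom_y2) by (apply cont01_mult; [exact Cr|apply cont01_sin, Ca]).
  repeat split; try assumption.
  unfold hom_norm. apply cont01_sqrt; [|intros; apply hom_norm_sq_pos; assumption].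
  unfold hom_norm_sq. repeat apply cont01_plus; apply cont01_mult; assumption.
Qed.

Theorem straight_homotopy_loop_homotopic : loop_homotopic_S3_minus T sigma
  (fun t => ((c1 * cos (P * t / 2), c1 * sin (P * t / 2)), (c2 * cos (W * t / 2), c2 * sin (W * t / 2)))).
Proof.
  destruct cont01_straight_homotopy_components as [Cx1 [Cy1 [Cx2 [Cy2 CN]]]].
  assert (HN : forall s t, 0 <= s <= 1 -> hom_norm s t <> 0)
    by (intros; apply Rgt_not_eq, hom_norm_pos; assumption).
  exists straight_homotopy.
  refine (conj _ (conj _ (conj _ (conj _ (conj straight_homotopy_0 (conj straight_homotopy_1
            (conj (fun s t _ => straight_homotopy_periodic s t) straight_homotopy_S3)))))));
    unfold straight_homotopy; simpl; apply cont01_div; assumption.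
Qed.

End StraightHomotopy.

(** * Satellites and their lifts *)

Definition avoids_lift_gamma (c : R -> V3) := forall t, ~ in_lift_gamma (c t) (unit_tangent c t).

Definition gap_sq (c : R -> V3) t :=
  gap_x (c t) (unit_tangent c t) * gap_x (c t) (unit_tangent c t)
  + gap_y (c t) (unit_tangent c t) * gap_y (c t) (unit_tangent c t).

Lemma gap_sq_pos c t : closed_immersed_S2 c -> avoids_lift_gamma c -> 0 < gap_sq c t.
Proof.
  intros Hc Hav. pose proof Hc as [HS2 [_ [_ [_ [_ Hd]]]]].
  apply gap_nonzero; [apply on_S2_dot3, HS2|apply unit_tangent_dot3, Hd|
                      apply closed_immersed_S2_dot3_unit_tangent, Hc|apply Hav].
Qed.

Lemma tl_homotopic_ends c0 c1 : tl_homotopic c0 c1 ->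
  closed_immersed_S2 c0 /\ avoids_lift_gamma c0 /\ closed_immersed_S2 c1 /\ avoids_lift_gamma c1.
Proof.
  intros [H [HH [H0 [H1 [_ [_ Hav]]]]]].
  replace c0 with (H 0) by (apply functional_extensionality, H0).
  replace c1 with (H 1) by (apply functional_extensionality, H1).
  split; [|split; [|split]]; try (apply HH; lra); intro t; apply Hav; lra.
Qed.

Lemma tl_homotopic_gap_arg_increment c0 c1 th0 th1 : tl_homotopic c0 c1 ->
  continuity th0 -> continuity th1 ->
  (forall t, 0 <= t <= 2 * PI -> is_arg (gap_x (c0 t) (unit_tangent c0 t)) (gap_y (c0 t) (unit_tangent c0 t)) (th0 t)) ->
  (forall t, 0 <= t <= 2 * PI -> is_arg (gap_x (c1 t) (unit_tangent c1 t)) (gap_y (c1 t) (unit_tangent c1 t)) (th1 t)) ->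
  th1 (2 * PI) - th1 0 = th0 (2 * PI) - th0 0.
Proof.
  intros [H [HH [H0 [H1 [[CH1 [CH2 _]] [[CU1 [CU2 _]] Hav]]]]]] Cth0 Cth1 Lth0 Lth1.
  replace c0 with (H 0) in Lth0 by (apply functional_extensionality, H0).
  replace c1 with (H 1) in Lth1 by (apply functional_extensionality, H1).
  apply (loop_arg_increment_homotopy_invariant
           (fun s t => gap_x (H s t) (unit_tangent (H s) t))
           (fun s t => gap_y (H s t) (unit_tangent (H s) t)) (2 * PI)).
  - apply Rmult_lt_0_compat; [lra|apply PI_RGT_0].
  - apply cont01_minus; assumption.
  - apply cont01_plus; assumption.
  - intros s t Hs. apply (gap_sq_pos (H s)); [apply HH, Hs|intro u; apply Hav, Hs].
  - intros s t Hs. destruct (HH s Hs) as [_ [Hper _]].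
    rewrite Hper, unit_tangent_periodic by exact Hper. split; reflexivity.
  - split; assumption.
  - split; assumption.
Qed.

Lemma model_curve_gap_arg sg P Q e q : sg * sg = 1 -> 0 < P -> Q = INR q -> 0 < e <= 1 ->
  (forall t, 0 < gap_sq (model_curve sg P Q e) t) ->
  continuity (fun t => arg_gap P Q e t + P * t) /\
  (forall t, is_arg (gap_x (model_curve sg P Q e t) (unit_tangent (model_curve sg P Q e) t))
                    (gap_y (model_curve sg P Q e t) (unit_tangent (model_curve sg P Q e) t))
                    (arg_gap P Q e t + P * t)).
Proof.
  intros Hsg HP HQ He Hgap.
  assert (Hrot : forall t, gap_x (model_curve sg P Q e t) (unit_tangent (model_curve sg P Q e) t)
       = cos (P * t) * model_gap_x P Q e t - sin (P * t) * model_gap_y P Q e t /\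
     gap_y (model_curve sg P Q e t) (unit_tangent (model_curve sg P Q e) t)
       = sin (P * t) * model_gap_x P Q e t + cos (P * t) * model_gap_y P Q e t).
  { intro t. apply gap_model_curve; [exact Hsg|]. apply model_speed_pos; assumption. }
  assert (Hgap' : forall t, 0 < model_gap_x P Q e t * model_gap_x P Q e t
                                + model_gap_y P Q e t * model_gap_y P Q e t).
  { intro t. assert (K := Hgap t). unfold gap_sq in K. destruct (Hrot t) as [-> ->] in K.
    rewrite rotate_norm_sq in K. exact K. }
  split.
  - intro t. apply continuity_pt_plus'; [eapply continuity_arg_gap; eassumption|].
    continuity_pt_auto.
  - intro t. destruct (Hrot t) as [-> ->]. apply is_arg_rotate; eapply is_arg_gap; eassumption.
Qed.

Lemma satellite_gap_arg_increment p q eta c th : (0 < p)%nat ->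
  unit_normal_field_gamma eta -> is_satellite eta p q c -> continuity th ->
  (forall t, 0 <= t <= 2 * PI ->
     is_arg (gap_x (c t) (unit_tangent c t)) (gap_y (c t) (unit_tangent c t)) (th t)) ->
  th (2 * PI) - th 0 = 2 * PI * INR p - 4 * PI * INR q.
Proof.
  intros Hp Heta [_ [eps0 [Heps0 Hsat]]] Cth Lth.
  set (e := Rmin 1 eps0 / 2).
  assert (He : 0 < e <= 1 /\ e < eps0).
  { assert (H1 := Rmin_l 1 eps0). assert (H2 := Rmin_r 1 eps0).
    assert (0 < Rmin 1 eps0) by (apply Rmin_glb_lt; lra). unfold e. lra. }
  destruct He as [He He0].
  destruct (unit_normal_field_gamma_vertical eta Heta) as [sg [Hsg Heta_v]].
  assert (Hhom := Hsat e (conj (proj1 He) He0)).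
  replace (sat_model eta p q e) with (model_curve sg (INR p) (INR q) e) in Hhom
    by (apply functional_extensionality; intro t; symmetry; apply sat_model_model_curve; auto).
  destruct (tl_homotopic_ends _ _ Hhom) as [_ [_ [Hm Havm]]].
  assert (HP : 0 < INR p) by (apply lt_0_INR; exact Hp).
  destruct (model_curve_gap_arg sg (INR p) (INR q) e q Hsg HP eq_refl He
              (fun t => gap_sq_pos _ t Hm Havm)) as [Cm Lm].
  rewrite <- (tl_homotopic_gap_arg_increment _ _ th _ Hhom Cth Cm Lth (fun t _ => Lm t)).
  assert (Hinc := arg_gap_increment (INR p) (INR q) e q eq_refl). lra.
Qed.

Lemma Nat_even_odd_cases p :
  (exists k, p = (2 * k)%nat /\ Nat.even p = true) \/
  (exists k, p = (2 * k + 1)%nat /\ Nat.even p = false).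
Proof.
  destruct (Nat.Even_or_Odd p) as [[k Hk]|[k Hk]]; [left|right]; exists k; split; auto.
  - apply Nat.even_spec. exists k. exact Hk.
  - rewrite <- Nat.negb_odd, (proj2 (Nat.odd_spec _)); [reflexivity|exists k; exact Hk].
Qed.

Lemma cos_sin_PI_mul_parity p q :
  cos (PI * (INR p - 2 * INR q)) = (if Nat.even p then 1 else -1) /\
  sin (PI * (INR p - 2 * INR q)) = 0.
Proof.
  split.
  - rewrite <- (cos_period _ q).
    replace (PI * (INR p - 2 * INR q) + 2 * INR q * PI) with (PI * INR p) by ring.
    destruct (Nat_even_odd_cases p) as [[k [-> ->]]|[k [-> ->]]].
    + rewrite mult_INR. replace (PI * (INR 2 * INR k)) with (0 + 2 * INR k * PI) by (simpl; ring).
      rewrite cos_period, cos_0. reflexivity.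
    + rewrite plus_INR, mult_INR.
      replace (PI * (INR 2 * INR k + INR 1)) with (PI + 2 * INR k * PI) by (simpl; ring).
      rewrite cos_period, cos_PI. reflexivity.
  - apply sin_eq_0_1. exists (Z.of_nat p - 2 * Z.of_nat q)%Z.
    rewrite minus_IZR, mult_IZR, <- !INR_IZR_INZ. simpl. ring.
Qed.

Lemma is_arg_lift_quasi_periodic fx fy th T phi : continuity th ->
  (forall t, is_arg (fx t) (fy t) (th t)) -> sin phi = 0 ->
  (forall t, fx (t + T) = cos phi * fx t /\ fy (t + T) = cos phi * fy t) ->
  th T = th 0 + phi -> forall t, th (t + T) = th t + phi.
Proof.
  intros Cth Lth Hs Hf H0.
  set (D := fun t => th (t + T) - th t - phi).
  assert (CD : continuity D).
  { intro x. unfold D. apply continuity_pt_minus'; [|apply continuity_pt_const'].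
    apply continuity_pt_minus'; [apply continuity_pt_shift, Cth|apply Cth]. }
  assert (Hcos : forall t, cos (D t) = 1).
  { intro t. unfold D. replace (th (t + T) - th t - phi) with (th (t + T) - (th t + phi)) by ring.
    apply (is_arg_cos_sub (fx (t + T)) (fy (t + T))); [apply Lth|].
    destruct (Hf t) as [-> ->].
    eapply is_arg_ext; [apply is_arg_rotate, Lth|rewrite Hs; ring|rewrite Hs; ring]. }
  intro t. assert (K := continuous_cos_eq_1_const D CD Hcos t).
  unfold D in K. rewrite Rplus_0_l, H0 in K. lra.
Qed.

Definition sign_of (b : bool) : R := if b then 1 else -1.

Lemma shift_sign_z2 (sigma : R -> V4) (T : R) (b : bool) :
  (forall t, sigma (t + T) = if b then sigma t else opp4 (sigma t)) ->
  forall t, z2x sigma (t + T) = sign_of b * z2x sigma t /\ z2y sigma (t + T) = sign_of b * z2y sigma t.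
Proof.
  intros H t. unfold z2x, z2y. rewrite H.
  destruct b; simpl; [split; ring|destruct (sigma t) as [[a b] [c d]]; simpl; split; ring].
Qed.

(** The gap along [c] is [2 z2^2], so [z2] winds half as much as the gap of the model curve. *)
Lemma satellite_lift_shift p q eta c sigma th : (0 < p)%nat ->
  unit_normal_field_gamma eta -> is_satellite eta p q c ->
  continuity (z1x sigma) -> continuity (z1y sigma) ->
  continuity (z2x sigma) -> continuity (z2y sigma) -> (forall t, on_S3 (sigma t)) ->
  (forall t, lmap (sigma t) = tangent_lift c t) ->
  continuity th -> (forall t, is_arg (z2x sigma t) (z2y sigma t) (th t)) ->
  (forall t, sigma (t + 2 * PI) = if Nat.even p then sigma t else opp4 (sigma t)) /\
  (forall t, th (t + 2 * PI) = th t + PI * (INR p - 2 * INR q)).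
Proof.
  intros Hp Heta Hsat C1x C1y C2x C2y HS3 Hl Cth Lth.
  set (phi := PI * (INR p - 2 * INR q)).
  destruct (cos_sin_PI_mul_parity p q) as [Hcos Hsin]. fold phi in Hcos, Hsin.
  assert (Hinc : th (2 * PI) = th 0 + phi).
  { assert (E := satellite_gap_arg_increment p q eta c (fun t => th t + th t) Hp Heta Hsat
      ltac:(intro x; apply continuity_pt_plus'; apply Cth)
      ltac:(intros t _; destruct (gap_lmap sigma c t (Hl t)) as [-> ->];
            apply is_arg_scale; [lra|apply is_arg_mul; apply Lth])).
    unfold phi. lra. }
  assert (Hshift : exists b : bool, forall t, sigma (t + 2 * PI) = if b then sigma t else opp4 (sigma t)).
  { destruct (lmap_shift_sign sigma (2 * PI)) as [H|H]; try assumption;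
      [|exists true; exact H|exists false; exact H].
    intro t. rewrite !Hl. destruct Hsat as [[_ [Hper _]] _].
    unfold tangent_lift. rewrite Hper, unit_tangent_periodic by exact Hper. reflexivity. }
  destruct Hshift as [b Hb]. assert (Hz := shift_sign_z2 sigma (2 * PI) b Hb).
  assert (Eb : b = Nat.even p).
  { assert (L0 := Lth (0 + 2 * PI)). destruct (Hz 0) as [-> ->] in L0.
    rewrite Rplus_0_l, Hinc in L0.
    assert (L1 := is_arg_rotate _ _ _ (if b then 0 else PI) (Lth 0)).
    assert (E : cos (th 0 + phi - (th 0 + (if b then 0 else PI))) = 1).
    { apply (is_arg_cos_sub (sign_of b * z2x sigma 0) (sign_of b * z2y sigma 0)); [exact L0|].
      eapply is_arg_ext; [exact L1| |]; destruct b; simpl;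
        rewrite ?cos_0, ?sin_0, ?cos_PI, ?sin_PI; ring. }
    replace (th 0 + phi - (th 0 + (if b then 0 else PI))) with (phi - (if b then 0 else PI)) in E
      by ring.
    destruct b; destruct (Nat.even p); try reflexivity; simpl in *;
      rewrite ?Rminus_0_r, ?cos_minus, ?cos_PI, ?sin_PI in E; lra. }
  subst b. split; [exact Hb|].
  apply (is_arg_lift_quasi_periodic (z2x sigma) (z2y sigma)); try assumption.
  rewrite Hcos. exact Hz.
Qed.

Lemma is_satellite_avoids eta p q c : is_satellite eta p q c -> avoids_lift_gamma c.
Proof.
  intros [_ [eps0 [Heps0 Hsat]]].
  apply (tl_homotopic_ends c (sat_model eta p q (eps0 / 2))), Hsat. lra.
Qed.

Lemma lmap_z2_pos (sigma : R -> V4) c t : closed_immersed_S2 c -> avoids_lift_gamma c ->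
  lmap (sigma t) = tangent_lift c t -> 0 < z2x sigma t * z2x sigma t + z2y sigma t * z2y sigma t.
Proof.
  intros Hc Hav Hl. assert (K := gap_sq_pos c t Hc Hav). unfold gap_sq in K.
  destruct (gap_lmap sigma c t Hl) as [-> ->] in K.
  destruct (Rlt_le_dec 0 (z2x sigma t * z2x sigma t + z2y sigma t * z2y sigma t)) as [H|H];
    [exact H|].
  destruct (sum_sq_le_0 _ _ H) as [E1 E2]. rewrite E1, E2 in K. lra.
Qed.

Lemma torus_curve_loop_homotopic p q sigma th c1 c2 :
  continuity (z1x sigma) -> continuity (z1y sigma) ->
  continuity (z2x sigma) -> continuity (z2y sigma) -> (forall t, on_S3 (sigma t)) ->
  continuity th -> (forall t, is_arg (z2x sigma t) (z2y sigma t) (th t)) ->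
  (forall t, sigma (t + 2 * PI) = if Nat.even p then sigma t else opp4 (sigma t)) ->
  (forall t, th (t + 2 * PI) = th t + PI * (INR p - 2 * INR q)) ->
  0 < c1 -> 0 < c2 -> c1 * c1 + c2 * c2 = 1 ->
  let T := if Nat.even p then 2 * PI else 4 * PI in
  (forall t, sigma (t + T) = sigma t) /\ loop_homotopic_S3_minus T sigma (torus_curve c1 c2 p q).
Proof.
  intros C1x C1y C2x C2y HS3 Cth Lth Hsig Hth Hc1 Hc2 Hc12 T.
  assert (Hper : forall t, sigma (t + T) = sigma t).
  { intro t. unfold T. destruct (Nat.even p); [apply Hsig|].
    replace (t + 4 * PI) with (t + 2 * PI + 2 * PI) by ring. rewrite !Hsig. apply opp4_involutive. }
  split; [exact Hper|]. unfold torus_curve.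
  destruct (Nat_even_odd_cases p) as [[k [Hk Ev]]|[k [Hk Ev]]]; unfold T in *; rewrite Ev in *.
  - apply (straight_homotopy_loop_homotopic sigma th (2 * PI) (INR p - 2 * INR q) (INR p)
             c1 c2 (Z.of_nat k - Z.of_nat q) (Z.of_nat k)); try assumption.
    + intro t. rewrite Hth. field.
    + rewrite minus_IZR, <- !INR_IZR_INZ, Hk, mult_INR. simpl. field.
    + rewrite <- INR_IZR_INZ, Hk, mult_INR. simpl. field.
  - apply (straight_homotopy_loop_homotopic sigma th (4 * PI) (INR p - 2 * INR q) (INR p)
             c1 c2 (Z.of_nat p - 2 * Z.of_nat q) (Z.of_nat p)); try assumption.
    + intro t. replace (t + 4 * PI) with (t + 2 * PI + 2 * PI) by ring. rewrite !Hth. field.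
    + rewrite minus_IZR, mult_IZR, <- !INR_IZR_INZ. simpl. field.
    + rewrite <- INR_IZR_INZ. field.
Qed.

Theorem mainTheorem1 :
  forall (p q : nat), (0 < p)%nat -> Nat.gcd p q = 1%nat ->
  forall (eta : R -> V3), unit_normal_field_gamma eta ->
  forall (c : R -> V3), is_satellite eta p q c ->
  forall (sigma : R -> V4),
    continuity (fun t => fst (fst (sigma t))) -> continuity (fun t => snd (fst (sigma t))) ->
    continuity (fun t => fst (snd (sigma t))) -> continuity (fun t => snd (snd (sigma t))) ->
    (forall t, on_S3 (sigma t)) ->
    (forall t, lmap (sigma t) = tangent_lift c t) ->
  forall (c1 c2 : R), 0 < c1 -> 0 < c2 -> c1 * c1 + c2 * c2 = 1 ->
  let T := if Nat.even p then 2 * PI else 4 * PI in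
  (forall t, sigma (t + T) = sigma t) /\
  loop_homotopic_S3_minus T sigma (torus_curve c1 c2 p q).
Proof.
  intros p q Hp _ eta Heta c Hsat sigma C1x C1y C2x C2y HS3 Hl c1 c2 Hc1 Hc2 Hc12.
  assert (Hz2 : forall t, 0 < z2x sigma t * z2x sigma t + z2y sigma t * z2y sigma t)
    by (intro t; apply (lmap_z2_pos sigma c t (proj1 Hsat) (is_satellite_avoids _ _ _ _ Hsat) (Hl t))).
  destruct (is_arg_lift_exists (z2x sigma) (z2y sigma) C2x C2y Hz2) as [th [Cth Lth]].
  destruct (satellite_lift_shift p q eta c sigma th) as [Hsig Hth]; try assumption.
  apply (torus_curve_loop_homotopic p q sigma th); assumption.
Qed.
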